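(* Let $\mathcal A$ be a unital C$^*$-algebra and let $\{x_1,\ldots,x_n\}$ and $\{y_1,\ldots,y_p\}$ be two finite families of self-adjoint elements each of which generates $\mathcal A$ as a C$^*$-algebra. Then $\mathfrak K_{top}^{(2)}(x_1,\ldots,x_n)=\mathfrak K_{top}^{(2)}(y_1,\ldots,y_p)$.
   Context: Microstates. Let $\mathcal A$ be a unital C$^*$-algebra and $x_1,\dots,x_n,y_1,\dots,y_m$ self-adjoint elements of $\mathcal A$. Let $\{P_r\}_{r\ge1}$ enumerate all noncommutative polynomials in the indeterminates $X_1,\dots,X_n,Y_1,\dots,Y_m$ whose coefficients have rational real and imaginary parts (constants allowed). $\mathcal M_k^{s.a.}(\mathbb C)$ is the set of self-adjoint $k\times k$ complex matrices and $\tau_k=\frac1k\mathrm{Tr}$. For $R,\epsilon>0$ and $r,k\in\mathbb N$, $\Gamma_R^{(top)}(x_1,\dots,x_n:y_1,\dots,y_m;k,\epsilon,P_1,\dots,P_r)$ is the set of $(A_1,\dots,A_n)\in\mathcal M_k^{s.a.}(\mathbb C)^n$ for which there exist $B_1,\dots,B_m\in\mathcal M_k^{s.a.}(\mathbb C)$ with $\max_{i,j}\{\|A_i\|,\|B_j\|\}\le R$ and $\big|\|P_j(A_1,\dots,A_n,B_1,\dots,B_m)\|-\|P_j(x_1,\dots,x_n,y_1,\dots,y_m)\|\big|\le\epsilon$ for $1\le j\le r$. When $m=0$ it is written $\Gamma_R^{(top)}(x_1,\dots,x_n;k,\epsilon,P_1,\dots,P_r)$. Covering numbers. On $\mathcal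 M_k(\mathbb C)^n$ put $\|(A_i)\|_2=(\sum_i\tau_k(A_i^*A_i))^{1/2}$. The $\omega$-orbit ball centred at $(B_i)$ is the set of $(A_i)$ such that some unitary $W\in\mathcal M_k(\mathbb C)$ satisfies $\|(A_i)-(WB_iW^* )\|_2<\omega$; for $\Sigma\subseteq\mathcal M_k(\mathbb C)^n$, $o_2(\Sigma,\omega)$ is the minimal number of $\omega$-orbit balls centred at points of $\Sigma$ covering $\Sigma$. Convention $\log 0=-\infty$. Topological orbit dimension: $\mathfrak K^{(2)}_{top}(x:y;\omega)=\sup_{R>0}\inf_{\epsilon>0,r\in\mathbb N}\limsup_{k\to\infty}\frac{\log o_2(\Gamma_R^{(top)}(x:y;k,\epsilon,P_1,\dots,P_r),\omega)}{k^2}$ and $\mathfrak K_{top}^{(2)}(x:y)=\limsup_{\omega\to0^+}\mathfrak K_{top}^{(2)}(x:y;\omega)$; when $m=0$ the ''$:y$'' part is omitted. *)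

From Stdlib Require Import Reals QArith Qreals ClassicalEpsilon Arith.
Open Scope R_scope.

Record C := mkC { Re : R; Im : R }.
Definition C0 : C := mkC 0 0.
Definition C1 : C := mkC 1 0.
Definition RtoC (r : R) : C := mkC r 0.
Definition Cadd (a b : C) : C := mkC (Re a + Re b) (Im a + Im b).
Definition Copp (a : C) : C := mkC (- Re a) (- Im a).
Definition Cmul (a b : C) : C :=
  mkC (Re a * Re b - Im a * Im b) (Re a * Im b + Im a * Re b).
Definition Cconj (a : C) : C := mkC (Re a) (- Im a).
Definition Cnorm (a : C) : R := sqrt (Re a ^ 2 + Im a ^ 2).

Definition QC : Type := (Q * Q)%type.
Definition QC2C (q : QC) : C := mkC (Q2R (fst q)) (Q2R (snd q)).

Fixpoint Rsum (k : nat) (f : nat -> R) : R :=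
  match k with O => 0 | S k' => Rsum k' f + f k' end.
Fixpoint Csum (k : nat) (f : nat -> C) : C :=
  match k with O => C0 | S k' => Cadd (Csum k' f) (f k') end.

Inductive ER := ERfin (r : R) | ERpinf | ERninf.
Definition ERle (a b : ER) : Prop :=
  match a, b with
  | ERninf, _ => True
  | _, ERpinf => True
  | ERfin x, ERfin y => x <= y
  | _, _ => False
  end.
Definition ER_is_sup (S : ER -> Prop) (l : ER) : Prop :=
  (forall x, S x -> ERle x l) /\
  (forall u, (forall x, S x -> ERle x u) -> ERle l u).
Definition ER_is_inf (S : ER -> Prop) (l : ER) : Prop :=
  (forall x, S x -> ERle l x) /\
  (forall u, (forall x, S x -> ERle u x) -> ERle u l).
Definition ER_sup (S : ER -> Prop) : ER :=
  epsilon (inhabits ERninf) (ER_is_sup S).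
Definition ER_inf (S : ER -> Prop) : ER :=
  epsilon (inhabits ERninf) (ER_is_inf S).

Definition ER_limsup_seq (a : nat -> ER) : ER :=
  ER_inf (fun v => exists N : nat,
            v = ER_sup (fun w => exists k : nat, (N <= k)%nat /\ w = a k)).
Definition ER_limsup_0plus (f : R -> ER) : ER :=
  ER_inf (fun v => exists d : R, 0 < d /\
            v = ER_sup (fun w => exists om : R, 0 < om < d /\ w = f om)).

Record CStarAlg := {
  ca :> Type;
  ca0 : ca;
  ca1 : ca;
  caadd : ca -> ca -> ca;
  caopp : ca -> ca;
  casc : C -> ca -> ca;
  camul : ca -> ca -> ca;
  castar : ca -> ca;
  canorm : ca -> R;
  ca_addA : forall a b c, caadd a (caadd b c) = caadd (caadd a b) c;
  ca_addC : forall a b, caadd a b = caadd b a;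
  ca_add0 : forall a, caadd a ca0 = a;
  ca_addN : forall a, caadd a (caopp a) = ca0;
  ca_sc1 : forall a, casc C1 a = a;
  ca_scA : forall s t a, casc s (casc t a) = casc (Cmul s t) a;
  ca_scDr : forall s a b, casc s (caadd a b) = caadd (casc s a) (casc s b);
  ca_scDl : forall s t a, casc (Cadd s t) a = caadd (casc s a) (casc t a);
  ca_mulA : forall a b c, camul a (camul b c) = camul (camul a b) c;
  ca_mul1l : forall a, camul ca1 a = a;
  ca_mul1r : forall a, camul a ca1 = a;
  ca_mulDl : forall a b c, camul (caadd a b) c = caadd (camul a c) (camul b c);
  ca_mulDr : forall a b c, camul a (caadd b c) = caadd (camul a b) (camul a c);
  ca_mulscl : forall s a b, camul (casc s a) b = casc s (camul a b);
  ca_mulscr : forall s a b, camul a (casc s b) = casc s (camul a b);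
  ca_starK : forall a, castar (castar a) = a;
  ca_starD : forall a b, castar (caadd a b) = caadd (castar a) (castar b);
  ca_starsc : forall s a, castar (casc s a) = casc (Cconj s) (castar a);
  ca_starM : forall a b, castar (camul a b) = camul (castar b) (castar a);
  ca_norm_ge0 : forall a, 0 <= canorm a;
  ca_norm_eq0 : forall a, canorm a = 0 -> a = ca0;
  ca_norm_sc : forall s a, canorm (casc s a) = Cnorm s * canorm a;
  ca_norm_triangle : forall a b, canorm (caadd a b) <= canorm a + canorm b;
  ca_norm_mul : forall a b, canorm (camul a b) <= canorm a * canorm b;
  ca_norm_cstar : forall a, canorm (camul (castar a) a) = canorm a ^ 2;
  ca_complete : forall u : nat -> ca,
    (forall eps, 0 < eps -> exists N : nat, forall p q : nat,
        (N <= p)%nat -> (N <= q)%nat -> canorm (caadd (u p) (caopp (u q))) < eps) ->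
    exists l, forall eps, 0 < eps -> exists N : nat, forall p : nat,
        (N <= p)%nat -> canorm (caadd (u p) (caopp l)) < eps
}.

Definition selfadjoint {A : CStarAlg} (a : A) : Prop := castar A a = a.

Inductive ncpoly (K : Type) : Type :=
  | NCvar (i : nat)
  | NCconst (c : K)
  | NCadd (p q : ncpoly K)
  | NCmul (p q : ncpoly K).
Arguments NCvar {K} i.
Arguments NCconst {K} c.
Arguments NCadd {K} p q.
Arguments NCmul {K} p q.

Fixpoint vars_lt {K : Type} (N : nat) (P : ncpoly K) : Prop :=
  match P with
  | NCvar i => (i < N)%nat
  | NCconst _ => True
  | NCadd p q => vars_lt N p /\ vars_lt N q
  | NCmul p q => vars_lt N p /\ vars_lt N q
  end.

Fixpoint ncmap {K L : Type} (f : K -> L) (P : ncpoly K) : ncpoly L :=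
  match P with
  | NCvar i => NCvar i
  | NCconst c => NCconst (f c)
  | NCadd p q => NCadd (ncmap f p) (ncmap f q)
  | NCmul p q => NCmul (ncmap f p) (ncmap f q)
  end.

Fixpoint aeval (A : CStarAlg) (x : nat -> A) (P : ncpoly C) : A :=
  match P with
  | NCvar i => x i
  | NCconst c => casc A c (ca1 A)
  | NCadd p q => caadd A (aeval A x p) (aeval A x q)
  | NCmul p q => camul A (aeval A x p) (aeval A x q)
  end.

(* x_0, ..., x_(n-1) generate A as a (unital) C*-algebra: polynomials in
   them (self-adjoint generators, so no stars needed) are norm dense. *)
Definition generates (A : CStarAlg) (n : nat) (x : nat -> A) : Prop :=
  forall (a : A) (eps : R), 0 < eps ->
    exists P : ncpoly C, vars_lt n P /\
      canorm A (caadd A (aeval A x P) (caopp A a)) < eps.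

(* e enumerates (with r >= 1) all polynomials with rational complex
   coefficients in the N indeterminates X_0..X_(N-1): P_r := e r. *)
Definition is_enum (N : nat) (e : nat -> ncpoly QC) : Prop :=
  (forall r, vars_lt N (e r)) /\
  (forall P, vars_lt N P -> exists r, (1 <= r)%nat /\ e r = P).

(* a k x k matrix is a function nat -> nat -> C vanishing outside [0,k)^2 *)
Definition Mat := nat -> nat -> C.
Definition mat_wf (k : nat) (M : Mat) : Prop :=
  forall i j, (k <= i)%nat \/ (k <= j)%nat -> M i j = C0.
Definition mat_add (M N : Mat) : Mat := fun i j => Cadd (M i j) (N i j).
Definition mat_sub (M N : Mat) : Mat := fun i j => Cadd (M i j) (Copp (N i j)).
Definition mat_scal (c : C) (M : Mat) : Mat := fun i j => Cmul c (M i j).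
Definition mat_mul (k : nat) (M N : Mat) : Mat :=
  fun i j => Csum k (fun l => Cmul (M i l) (N l j)).
Definition mat_adj (M : Mat) : Mat := fun i j => Cconj (M j i).
Definition mat_id (k : nat) : Mat :=
  fun i j => if andb (Nat.ltb i k) (Nat.eqb i j) then C1 else C0.
Definition mat_selfadj (k : nat) (M : Mat) : Prop :=
  mat_wf k M /\ forall i j, M i j = mat_adj M i j.
Definition mat_unitary (k : nat) (W : Mat) : Prop :=
  mat_wf k W /\ mat_mul k (mat_adj W) W = mat_id k /\ mat_mul k W (mat_adj W) = mat_id k.

Definition vnorm (k : nat) (v : nat -> C) : R :=
  sqrt (Rsum k (fun i => Cnorm (v i) ^ 2)).
Definition matvec (k : nat) (M : Mat) (v : nat -> C) : nat -> C :=
  fun i => Csum k (fun j => Cmul (M i j) (v j)).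
Definition opnorm (k : nat) (M : Mat) : R :=
  epsilon (inhabits 0)
    (is_lub (fun s => exists v, vnorm k v <= 1 /\ s = vnorm k (matvec k M v))).

Definition tau (k : nat) (M : Mat) : C :=
  Cmul (RtoC (/ INR k)) (Csum k (fun i => M i i)).

Definition orbit_dist (k n : nat) (As Bs : nat -> Mat) (W : Mat) : R :=
  sqrt (Rsum n (fun i =>
    let D := mat_sub (As i) (mat_mul k (mat_mul k W (Bs i)) (mat_adj W)) in
    Re (tau k (mat_mul k (mat_adj D) D)))).

(* n-tuples of k x k matrices: entries with index >= n are the zero matrix *)
Definition tuple_wf (k n : nat) (As : nat -> Mat) : Prop :=
  (forall i, (i < n)%nat -> mat_wf k (As i)) /\
  (forall i, (n <= i)%nat -> forall a b, As i a b = C0).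

Fixpoint meval (k : nat) (As : nat -> Mat) (P : ncpoly C) : Mat :=
  match P with
  | NCvar i => As i
  | NCconst c => mat_scal c (mat_id k)
  | NCadd p q => mat_add (meval k As p) (meval k As q)
  | NCmul p q => mat_mul k (meval k As p) (meval k As q)
  end.

Definition orbit_covers (k n : nat) (Sigma : (nat -> Mat) -> Prop) (om : R)
    (N : nat) : Prop :=
  exists centres : list (nat -> Mat),
    length centres = N /\
    (forall B, List.In B centres -> Sigma B) /\
    (forall As, Sigma As -> exists B, List.In B centres /\
       exists W, mat_unitary k W /\ orbit_dist k n As B W < om).

Definition o2 (k n : nat) (Sigma : (nat -> Mat) -> Prop) (om : R) : nat :=
  epsilon (inhabits 0%nat) (fun N => orbit_covers k n Sigma om N /\
     forall M, orbit_covers k n Sigma om M -> (N <= M)%nat).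

Definition log_div (N k : nat) : ER :=
  match N with
  | O => ERninf
  | _ => ERfin (ln (INR N) / INR (k * k))
  end.

Definition join (n : nat) {T : Type} (f g : nat -> T) : nat -> T :=
  fun i => if Nat.ltb i n then f i else g (i - n)%nat.

(* Gamma_R^(top)(x_1..x_n : y_1..y_m ; k, eps, P_1..P_r), with
   X_i = variable i-1 and Y_j = variable n+j-1 *)
Definition Gamma_top (A : CStarAlg) (n m : nat) (x y : nat -> A)
    (e : nat -> ncpoly QC) (Rr : R) (k : nat) (eps : R) (r : nat)
    : (nat -> Mat) -> Prop :=
  fun As =>
    tuple_wf k n As /\ (forall i, (i < n)%nat -> mat_selfadj k (As i)) /\
    exists Bs : nat -> Mat,
      tuple_wf k m Bs /\ (forall j, (j < m)%nat -> mat_selfadj k (Bs j)) /\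
      (forall i, (i < n)%nat -> opnorm k (As i) <= Rr) /\
      (forall j, (j < m)%nat -> opnorm k (Bs j) <= Rr) /\
      (forall j, (1 <= j <= r)%nat ->
         Rabs (opnorm k (meval k (join n As Bs) (ncmap QC2C (e j)))
               - canorm A (aeval A (join n x y) (ncmap QC2C (e j)))) <= eps).

Definition Ktop_om (A : CStarAlg) (n m : nat) (x y : nat -> A)
    (e : nat -> ncpoly QC) (om : R) : ER :=
  ER_sup (fun v => exists Rr, 0 < Rr /\ v =
    ER_inf (fun w => exists eps r, 0 < eps /\ (1 <= r)%nat /\ w =
      ER_limsup_seq (fun k =>
        log_div (o2 k n (Gamma_top A n m x y e Rr k eps r) om) k))).

Definition Ktop_rel (A : CStarAlg) (n m : nat) (x y : nat -> A)
    (e : nat -> ncpoly QC) : ER :=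
  ER_limsup_0plus (fun om => Ktop_om A n m x y e om).

Definition Ktop (A : CStarAlg) (n : nat) (x : nat -> A)
    (e : nat -> ncpoly QC) : ER :=
  Ktop_rel A n 0 x (fun _ => ca0 A) e.

(* By symmetry it suffices to prove K(x) <= K(y).  As y generates A, every x_i is
   approximated by a rational polynomial S_i(y); as x generates A, every y_j is
   approximated by a self-adjoint rational polynomial Q_j(x).  If As is a microstate
   of x (it reproduces, up to epx, the norms of the first rx polynomials of the
   enumeration), then phi(As) := (Q_j(As))_j is a microstate of y, and S(phi(As))
   is close to As in the normalized Hilbert-Schmidt distance.  Polynomials are
   Lipschitz for that distance on operator-norm bounded self-adjoint tuples and
   commute with unitary conjugation, so whenever phi(As) and phi(Bs) lie in om-orbit
   balls around a common centre, As lies in an om'-orbit ball around Bs.  Hence a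
   cover of the y-microstates by om-orbit balls yields a cover of the x-microstates
   by as many om'-orbit balls (orbit_numbers_compare).  Passing to the limsup in k,
   the infimum over (eps, r) and the supremum over R, and using that K(.; om) is
   antitone in om, gives K(x) <= K(y). *)

From Pilot Require Import Defs.
From Stdlib Require Import Reals QArith Qreals Lra Lia Arith ZArith ClassicalEpsilon Classical FunctionalExtensionality List.
(* Re-import the definitions so that [C] denotes the complex numbers, not the
   binomial coefficient of the real library. *)
Import Pilot.Defs.
Open Scope R_scope.

(** * Complex numbers *)

Lemma C_ext : forall a b : C, Re a = Re b -> Im a = Im b -> a = b.
Proof. intros [a1 a2] [b1 b2]; simpl; intros; subst; reflexivity. Qed.

Ltac Cring := apply C_ext; simpl; ring.

Ltac sum_sq_nonneg := repeat apply Rplus_le_le_0_compat; apply pow2_ge_0.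

Lemma sqrt_ge_of_sq : forall x y, 0 <= y -> x * x <= y -> x <= sqrt y.
Proof.
  intros x y Hy H. destruct (Rle_or_lt x 0) as [H0|H0].
  - pose proof (sqrt_pos y); lra.
  - rewrite <- (sqrt_square x) by lra. apply sqrt_le_1_alt. exact H.
Qed.

Lemma sqrt_le_of_sq : forall x y, 0 <= x -> 0 <= y -> x <= y * y -> sqrt x <= y.
Proof.
  intros x y Hx Hy H. rewrite <- (sqrt_square y) by lra. apply sqrt_le_1_alt. exact H.
Qed.

Lemma sqrt_sq_eq : forall x, 0 <= x -> sqrt x ^ 2 = x.
Proof. intros. simpl. rewrite Rmult_1_r. apply sqrt_sqrt; auto. Qed.

Lemma sq_eq_nonneg : forall a b, 0 <= a -> 0 <= b -> a ^ 2 = b ^ 2 -> a = b.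
Proof. intros. simpl in H1. nra. Qed.

Lemma Cnorm_ge0 : forall a, 0 <= Cnorm a.
Proof. intros; apply sqrt_pos. Qed.

Lemma Cnorm_sq : forall a, Cnorm a * Cnorm a = Re a ^ 2 + Im a ^ 2.
Proof. intros; unfold Cnorm; rewrite sqrt_sqrt; nra. Qed.

Lemma Cnorm_mul : forall a b, Cnorm (Cmul a b) = Cnorm a * Cnorm b.
Proof.
  intros [a1 a2] [b1 b2]; unfold Cnorm, Cmul; simpl.
  rewrite <- sqrt_mult by nra. f_equal; ring.
Qed.

Lemma Cnorm_conj : forall a, Cnorm (Cconj a) = Cnorm a.
Proof. intros [a1 a2]; unfold Cnorm; simpl; f_equal; ring. Qed.

Lemma Cnorm_opp : forall a, Cnorm (Copp a) = Cnorm a.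
Proof. intros [a1 a2]; unfold Cnorm; simpl; f_equal; ring. Qed.

Lemma Cnorm_C0 : Cnorm C0 = 0.
Proof. unfold Cnorm; cbn [Re Im C0]. replace (0 ^ 2 + 0 ^ 2) with 0 by ring. apply sqrt_0. Qed.

Lemma Cnorm_C1 : Cnorm C1 = 1.
Proof. unfold Cnorm; cbn [Re Im C1]. replace (1 ^ 2 + 0 ^ 2) with 1 by ring. apply sqrt_1. Qed.

Lemma Cnorm_RtoC : forall r, Cnorm (RtoC r) = Rabs r.
Proof. intros; unfold Cnorm; simpl. rewrite <- sqrt_Rsqr_abs; unfold Rsqr; f_equal; ring. Qed.

(* Triangle inequality, via the Cauchy-Schwarz inequality in R^2. *)
Lemma Cnorm_add : forall a b, Cnorm (Cadd a b) <= Cnorm a + Cnorm b.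
Proof.
  intros [a1 a2] [b1 b2]; unfold Cnorm, Cadd; cbn [Re Im].
  pose proof (sqrt_pos (a1^2+a2^2)); pose proof (sqrt_pos (b1^2+b2^2)).
  apply sqrt_le_of_sq; [sum_sq_nonneg | lra |].
  assert (H1 := sqrt_sqrt (a1^2+a2^2) ltac:(sum_sq_nonneg)).
  assert (H2 := sqrt_sqrt (b1^2+b2^2) ltac:(sum_sq_nonneg)).
  assert (Hcs : a1*b1+a2*b2 <= sqrt (a1^2+a2^2) * sqrt (b1^2+b2^2)).
  { rewrite <- sqrt_mult by sum_sq_nonneg. apply sqrt_ge_of_sq.
    - apply Rmult_le_pos; sum_sq_nonneg.
    - pose proof (pow2_ge_0 (a1*b2-a2*b1)). nra. }
  nra.
Qed.

Lemma Re_le_Cnorm : forall a, Rabs (Re a) <= Cnorm a.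
Proof.
  intros [a1 a2]; unfold Cnorm; simpl. rewrite <- sqrt_Rsqr_abs. apply sqrt_le_1_alt.
  unfold Rsqr; nra.
Qed.

Lemma Im_le_Cnorm : forall a, Rabs (Im a) <= Cnorm a.
Proof.
  intros [a1 a2]; unfold Cnorm; simpl. rewrite <- sqrt_Rsqr_abs. apply sqrt_le_1_alt.
  unfold Rsqr; nra.
Qed.

Lemma Cnorm_le_ReIm : forall a, Cnorm a <= Rabs (Re a) + Rabs (Im a).
Proof.
  intros [a1 a2]; unfold Cnorm; simpl.
  pose proof (Rabs_pos a1); pose proof (Rabs_pos a2).
  apply sqrt_le_of_sq; [nra | lra |].
  assert (a1^2 = Rabs a1 * Rabs a1) by (rewrite <- Rabs_mult; rewrite Rabs_right; nra).
  assert (a2^2 = Rabs a2 * Rabs a2) by (rewrite <- Rabs_mult; rewrite Rabs_right; nra).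
  nra.
Qed.

Lemma Cnorm_eq0 : forall a, Cnorm a = 0 -> a = C0.
Proof.
  intros [a1 a2] H. unfold Cnorm in H; simpl in H.
  apply sqrt_eq_0 in H; [|nra]. apply C_ext; simpl; nra.
Qed.

Lemma Re_conj_mul : forall a, Re (Cmul (Cconj a) a) = Cnorm a * Cnorm a.
Proof. intros; rewrite Cnorm_sq; destruct a; simpl; ring. Qed.

(** * Finite sums *)

Lemma Rsum_ext : forall k f g, (forall i, (i < k)%nat -> f i = g i) -> Rsum k f = Rsum k g.
Proof. induction k; intros f g H; simpl; auto. rewrite (IHk f g) by auto. rewrite H by lia. auto. Qed.

Lemma Rsum_add : forall k f g, Rsum k (fun i => f i + g i) = Rsum k f + Rsum k g.
Proof. induction k; intros; simpl; [ring|rewrite IHk; ring]. Qed.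

Lemma Rsum_scal : forall k c f, Rsum k (fun i => c * f i) = c * Rsum k f.
Proof. induction k; intros; simpl; [ring|rewrite IHk; ring]. Qed.

Lemma Rsum_le : forall k f g, (forall i, (i < k)%nat -> f i <= g i) -> Rsum k f <= Rsum k g.
Proof. induction k; intros f g H; simpl; [lra|]. pose proof (IHk f g ltac:(auto)). pose proof (H k ltac:(lia)). lra. Qed.

Lemma Rsum_zero : forall k, Rsum k (fun _ => 0) = 0.
Proof. induction k; simpl; auto. rewrite IHk; ring. Qed.

Lemma Rsum_nonneg : forall k f, (forall i, (i < k)%nat -> 0 <= f i) -> 0 <= Rsum k f.
Proof. intros. rewrite <- (Rsum_zero k). apply Rsum_le; auto. Qed.

Lemma Rsum_const : forall k c, Rsum k (fun _ => c) = INR k * c.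
Proof. induction k; intros; [simpl; ring|]. change (Rsum (S k) (fun _ => c)) with (Rsum k (fun _ => c) + c). rewrite IHk, S_INR; ring. Qed.

Lemma Rsum_term_le : forall k f i, (forall j, (j < k)%nat -> 0 <= f j) -> (i < k)%nat -> f i <= Rsum k f.
Proof.
  induction k; intros f i Hf Hi; [lia|]. simpl.
  destruct (Nat.eq_dec i k) as [->|Hne].
  - pose proof (Rsum_nonneg k f ltac:(auto)); lra.
  - pose proof (IHk f i ltac:(auto) ltac:(lia)). pose proof (Hf k ltac:(lia)); lra.
Qed.

Lemma Rsum_exch : forall a b (f : nat -> nat -> R),
  Rsum a (fun i => Rsum b (fun j => f i j)) = Rsum b (fun j => Rsum a (fun i => f i j)).
Proof.
  induction a; intros; simpl. rewrite Rsum_zero; auto.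
  rewrite IHa. rewrite <- Rsum_add. reflexivity.
Qed.

Lemma Rsum_single : forall k g i, (i < k)%nat -> (forall j, (j < k)%nat -> j <> i -> g j = 0) -> Rsum k g = g i.
Proof.
  induction k; intros g i Hi H; [lia|]. cbn [Rsum].
  destruct (Nat.eq_dec i k) as [->|Hne].
  - rewrite (Rsum_ext k _ (fun _ => 0)) by (intros; apply H; lia). rewrite Rsum_zero; ring.
  - rewrite (IHk g i) by (auto; lia). rewrite (H k) by lia. ring.
Qed.

Lemma Csum_ext : forall k f g, (forall i, (i < k)%nat -> f i = g i) -> Csum k f = Csum k g.
Proof. induction k; intros f g H; simpl; auto. rewrite (IHk f g) by auto. rewrite H by lia. auto. Qed.

Lemma Re_Csum : forall k f, Re (Csum k f) = Rsum k (fun i => Re (f i)).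
Proof. induction k; intros; simpl; auto. rewrite IHk; auto. Qed.
Lemma Im_Csum : forall k f, Im (Csum k f) = Rsum k (fun i => Im (f i)).
Proof. induction k; intros; simpl; auto. rewrite IHk; auto. Qed.

Lemma Csum_add : forall k f g, Csum k (fun i => Cadd (f i) (g i)) = Cadd (Csum k f) (Csum k g).
Proof. intros; apply C_ext; rewrite ?Re_Csum, ?Im_Csum; simpl; rewrite ?Re_Csum, ?Im_Csum; apply Rsum_add. Qed.

Lemma Csum_mull : forall k c f, Csum k (fun i => Cmul c (f i)) = Cmul c (Csum k f).
Proof. induction k; intros; simpl. Cring. rewrite IHk. Cring. Qed.

Lemma Csum_mulr : forall k c f, Csum k (fun i => Cmul (f i) c) = Cmul (Csum k f) c.
Proof. induction k; intros; simpl. Cring. rewrite IHk. Cring. Qed.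

Lemma Csum_conj : forall k f, Csum k (fun i => Cconj (f i)) = Cconj (Csum k f).
Proof. induction k; intros; simpl. Cring. rewrite IHk. Cring. Qed.

Lemma Csum_opp : forall k f, Csum k (fun i => Copp (f i)) = Copp (Csum k f).
Proof. induction k; intros; simpl. Cring. rewrite IHk. Cring. Qed.

Lemma Csum_zero : forall k f, (forall i, (i<k)%nat -> f i = C0) -> Csum k f = C0.
Proof. induction k; intros; simpl; auto. rewrite IHk, H by auto. Cring. Qed.

Lemma Csum_exch : forall a b (f : nat -> nat -> C),
  Csum a (fun i => Csum b (fun j => f i j)) = Csum b (fun j => Csum a (fun i => f i j)).
Proof.
  intros; apply C_ext; rewrite ?Re_Csum, ?Im_Csum;
  [ erewrite Rsum_ext by (intros; apply Re_Csum) | erewrite Rsum_ext by (intros; apply Im_Csum) ];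
  rewrite Rsum_exch; apply Rsum_ext; intros; [rewrite Re_Csum|rewrite Im_Csum]; auto.
Qed.

Lemma Csum_single : forall k g i, (i < k)%nat -> (forall j, (j < k)%nat -> j <> i -> g j = C0) -> Csum k g = g i.
Proof.
  induction k; intros g i Hi H; [lia|]. simpl.
  destruct (Nat.eq_dec i k) as [->|Hne].
  - rewrite Csum_zero by (intros; apply H; lia). Cring.
  - rewrite (IHk g i) by (auto; lia). rewrite (H k) by lia. Cring.
Qed.

Lemma Cnorm_Csum : forall k f, Cnorm (Csum k f) <= Rsum k (fun i => Cnorm (f i)).
Proof.
  induction k; intros; simpl. rewrite Cnorm_C0; lra.
  pose proof (Cnorm_add (Csum k f) (f k)). pose proof (IHk f). lra.
Qed.

(* Cauchy-Schwarz inequality for finite real sums, by induction on the length: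
   the inductive step is 2 u v a b <= u^2 b^2 + v^2 a^2. *)
Lemma Rsum_CS : forall k f g,
  Rsum k (fun i => f i * g i) <= sqrt (Rsum k (fun i => f i ^ 2)) * sqrt (Rsum k (fun i => g i ^ 2)).
Proof.
  induction k as [|k IH]; intros f g; cbn [Rsum].
  - rewrite sqrt_0; lra.
  - set (F := Rsum k (fun i => f i ^ 2)). set (G := Rsum k (fun i => g i ^ 2)).
    assert (HF : 0 <= F) by (apply Rsum_nonneg; intros; apply pow2_ge_0).
    assert (HG : 0 <= G) by (apply Rsum_nonneg; intros; apply pow2_ge_0).
    specialize (IH f g). fold F G in IH.
    set (u := sqrt F) in *. set (v := sqrt G) in *. set (a := f k). set (b := g k).
    assert (Hu : u * u = F) by (apply sqrt_sqrt; auto).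
    assert (Hv : v * v = G) by (apply sqrt_sqrt; auto).
    pose proof (sqrt_pos F); pose proof (sqrt_pos G).
    rewrite <- sqrt_mult by (pose proof (pow2_ge_0 a); pose proof (pow2_ge_0 b); lra).
    apply Rle_trans with (u * v + a * b); [lra|].
    apply sqrt_ge_of_sq.
    + apply Rmult_le_pos; pose proof (pow2_ge_0 a); pose proof (pow2_ge_0 b); lra.
    + rewrite <- Hu, <- Hv. pose proof (pow2_ge_0 (u * b - v * a)). nra.
Qed.

Lemma Rsum_minkowski : forall k F G H,
  (forall i, (i < k)%nat -> 0 <= F i /\ F i <= G i + H i) ->
  sqrt (Rsum k (fun i => F i ^ 2)) <= sqrt (Rsum k (fun i => G i ^ 2)) + sqrt (Rsum k (fun i => H i ^ 2)).
Proof.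
  intros.
  assert (Hg : 0 <= Rsum k (fun i => G i ^ 2)) by (apply Rsum_nonneg; intros; apply pow2_ge_0).
  assert (Hh : 0 <= Rsum k (fun i => H i ^ 2)) by (apply Rsum_nonneg; intros; apply pow2_ge_0).
  pose proof (sqrt_pos (Rsum k (fun i => G i ^ 2))); pose proof (sqrt_pos (Rsum k (fun i => H i ^ 2))).
  apply sqrt_le_of_sq; [apply Rsum_nonneg; intros; apply pow2_ge_0 | lra |].
  apply Rle_trans with (Rsum k (fun i => (G i + H i) ^ 2)).
  { apply Rsum_le; intros i Hi. destruct (H0 i Hi). nra. }
  rewrite (Rsum_ext k _ (fun i => G i ^ 2 + (2 * (G i * H i) + H i ^ 2))) by (intros; ring).
  rewrite Rsum_add, Rsum_add, Rsum_scal.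
  pose proof (Rsum_CS k G H).
  pose proof (sqrt_sqrt _ Hg). pose proof (sqrt_sqrt _ Hh). nra.
Qed.

Lemma sqrt_Rsum_le_sum : forall k F, (forall i, (i<k)%nat -> 0 <= F i) ->
  sqrt (Rsum k (fun i => F i ^ 2)) <= Rsum k F.
Proof.
  intros k F HF. apply sqrt_le_of_sq.
  - apply Rsum_nonneg; intros; apply pow2_ge_0.
  - apply Rsum_nonneg; auto.
  - induction k as [|k IH]; cbn [Rsum]; [lra|].
    assert (IH' := IH ltac:(auto)). pose proof (Rsum_nonneg k F ltac:(auto)). pose proof (HF k ltac:(lia)).
    pose proof (Rmult_le_pos (Rsum k F) (F k) ltac:(auto) ltac:(auto)). simpl in *. nra.
Qed.

(** * Vectors and the operator norm *)

Lemma vnorm_ge0 : forall k v, 0 <= vnorm k v.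
Proof. intros; apply sqrt_pos. Qed.

Lemma vnorm_sq : forall k v, vnorm k v ^ 2 = Rsum k (fun i => Cnorm (v i) ^ 2).
Proof. intros; unfold vnorm; apply sqrt_sq_eq, Rsum_nonneg; intros; apply pow2_ge_0. Qed.

Lemma vnorm_ext : forall k u v, (forall i, (i<k)%nat -> u i = v i) -> vnorm k u = vnorm k v.
Proof. intros; unfold vnorm; f_equal; apply Rsum_ext; intros; rewrite H; auto. Qed.

Lemma vnorm_scal : forall k c v, vnorm k (fun i => Cmul c (v i)) = Cnorm c * vnorm k v.
Proof.
  intros; unfold vnorm.
  rewrite (Rsum_ext k _ (fun i => Cnorm c ^ 2 * Cnorm (v i) ^ 2)) by (intros; rewrite Cnorm_mul; ring).
  rewrite Rsum_scal, sqrt_mult by (apply pow2_ge_0 || (apply Rsum_nonneg; intros; apply pow2_ge_0)).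
  rewrite sqrt_pow2 by apply Cnorm_ge0. auto.
Qed.

Lemma vnorm_add : forall k u v, vnorm k (fun i => Cadd (u i) (v i)) <= vnorm k u + vnorm k v.
Proof. intros; unfold vnorm; apply Rsum_minkowski; intros; split; [apply Cnorm_ge0|apply Cnorm_add]. Qed.

Lemma vnorm_comp_le : forall k v i, (i<k)%nat -> Cnorm (v i) <= vnorm k v.
Proof.
  intros. unfold vnorm. rewrite <- (sqrt_pow2 (Cnorm (v i))) by apply Cnorm_ge0.
  apply sqrt_le_1_alt. apply (Rsum_term_le k (fun i => Cnorm (v i) ^ 2)); auto. intros; apply pow2_ge_0.
Qed.

Lemma vnorm_zero : forall k v, (forall i, (i<k)%nat -> v i = C0) -> vnorm k v = 0.
Proof. intros; unfold vnorm. rewrite (Rsum_ext k _ (fun _ => 0)). rewrite Rsum_zero; apply sqrt_0.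
  intros; rewrite H, Cnorm_C0 by auto; ring. Qed.

Lemma vnorm_eq0 : forall k v, vnorm k v = 0 -> forall i, (i<k)%nat -> v i = C0.
Proof. intros. pose proof (vnorm_comp_le k v i H0). pose proof (Cnorm_ge0 (v i)).
  apply Cnorm_eq0; lra. Qed.

Definition opset (k : nat) (M : Mat) : R -> Prop :=
  fun s => exists v, vnorm k v <= 1 /\ s = vnorm k (matvec k M v).

(* A crude a priori bound showing that [opset] is bounded above. *)
Definition rowbound (k : nat) (M : Mat) : R :=
  sqrt (Rsum k (fun i => (Rsum k (fun j => Cnorm (M i j))) ^ 2)).

Lemma opset_bounded : forall k M s, opset k M s -> s <= rowbound k M.
Proof.
  intros k M s [v [Hv ->]]. unfold vnorm, rowbound. apply sqrt_le_1_alt. apply Rsum_le; intros i Hi.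
  unfold matvec. pose proof (Cnorm_Csum k (fun j => Cmul (M i j) (v j))).
  assert (Rsum k (fun j => Cnorm (Cmul (M i j) (v j))) <= Rsum k (fun j => Cnorm (M i j))).
  { apply Rsum_le; intros j Hj. rewrite Cnorm_mul. pose proof (vnorm_comp_le k v j Hj).
    pose proof (Cnorm_ge0 (M i j)); pose proof (Cnorm_ge0 (v j)). nra. }
  pose proof (Cnorm_ge0 (Csum k (fun j => Cmul (M i j) (v j)))). simpl. nra.
Qed.

Lemma opnorm_lub : forall k M, is_lub (opset k M) (opnorm k M).
Proof.
  intros. unfold opnorm. apply epsilon_spec.
  destruct (completeness (opset k M)) as [m Hm].
  - exists (rowbound k M). intros s Hs. apply opset_bounded; auto.
  - exists (vnorm k (matvec k M (fun _ => C0))). exists (fun _ => C0). split; auto.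
    rewrite vnorm_zero; auto; lra.
  - exists m; auto.
Qed.

Lemma matvec_zero : forall k M, vnorm k (matvec k M (fun _ => C0)) = 0.
Proof. intros; apply vnorm_zero; intros; unfold matvec; apply Csum_zero; intros; Cring. Qed.

Lemma opnorm_ge0 : forall k M, 0 <= opnorm k M.
Proof.
  intros. destruct (opnorm_lub k M) as [H _]. rewrite <- (matvec_zero k M). apply H.
  exists (fun _ => C0). split; auto. rewrite vnorm_zero; auto; lra.
Qed.

Lemma matvec_scal : forall k M c v i, matvec k M (fun j => Cmul c (v j)) i = Cmul c (matvec k M v i).
Proof. intros; unfold matvec. rewrite <- Csum_mull. apply Csum_ext; intros; Cring. Qed.

(* |M v| <= ||M|| |v|, by rescaling v to the unit ball. *)
Lemma vnorm_matvec_le : forall k M v, vnorm k (matvec k M v) <= opnorm k M * vnorm k v.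
Proof.
  intros. destruct (opnorm_lub k M) as [H _].
  destruct (Req_dec (vnorm k v) 0) as [H0|H0].
  - rewrite H0, Rmult_0_r. rewrite vnorm_zero. lra. intros; unfold matvec.
    apply Csum_zero; intros. rewrite (vnorm_eq0 k v H0) by auto. Cring.
  - pose proof (vnorm_ge0 k v). set (c := RtoC (/ vnorm k v)).
    assert (Hc : Cnorm c = / vnorm k v).
    { unfold c; rewrite Cnorm_RtoC, Rabs_right; auto. apply Rle_ge, Rlt_le, Rinv_0_lt_compat; lra. }
    assert (Hs : opset k M (vnorm k (matvec k M (fun j => Cmul c (v j))))).
    { eexists; split; [|reflexivity]. rewrite vnorm_scal, Hc. right; field; auto. }
    apply H in Hs. erewrite vnorm_ext in Hs by (intros; apply matvec_scal).
    rewrite vnorm_scal, Hc in Hs.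
    apply Rmult_le_reg_l with (/ vnorm k v). apply Rinv_0_lt_compat; lra.
    replace (/ vnorm k v * (opnorm k M * vnorm k v)) with (opnorm k M) by (field; auto). auto.
Qed.

Lemma opnorm_le : forall k M c, 0 <= c ->
  (forall v, vnorm k (matvec k M v) <= c * vnorm k v) -> opnorm k M <= c.
Proof.
  intros k M c Hc H. destruct (opnorm_lub k M) as [_ H1]. apply H1. intros s [v [Hv ->]].
  specialize (H v). pose proof (vnorm_ge0 k v). nra.
Qed.

Lemma opnorm_ext : forall k M N, (forall i j, (i<k)%nat -> (j<k)%nat -> M i j = N i j) -> opnorm k M = opnorm k N.
Proof.
  intros. assert (forall v, vnorm k (matvec k M v) = vnorm k (matvec k N v)).
  { intros; apply vnorm_ext; intros; unfold matvec; apply Csum_ext; intros; rewrite H; auto. }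
  apply Rle_antisym; apply opnorm_le; try apply opnorm_ge0; intros.
  rewrite H0; apply vnorm_matvec_le. rewrite <- H0; apply vnorm_matvec_le.
Qed.

Lemma matvec_mul : forall k M N v i, matvec k (mat_mul k M N) v i = matvec k M (matvec k N v) i.
Proof.
  intros; unfold matvec, mat_mul.
  rewrite (Csum_ext k _ (fun j => Csum k (fun l => Cmul (M i l) (Cmul (N l j) (v j))))).
  - rewrite Csum_exch. apply Csum_ext; intros. rewrite Csum_mull. auto.
  - intros. rewrite <- Csum_mulr. apply Csum_ext; intros; Cring.
Qed.

Lemma matvec_add : forall k M N v i, matvec k (mat_add M N) v i = Cadd (matvec k M v i) (matvec k N v i).
Proof. intros; unfold matvec, mat_add. rewrite <- Csum_add. apply Csum_ext; intros; Cring. Qed.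

Lemma opnorm_mul : forall k M N, opnorm k (mat_mul k M N) <= opnorm k M * opnorm k N.
Proof.
  intros. apply opnorm_le. apply Rmult_le_pos; apply opnorm_ge0. intros.
  erewrite vnorm_ext by (intros; apply matvec_mul).
  pose proof (Rmult_le_compat_l _ _ _ (opnorm_ge0 k M) (vnorm_matvec_le k N v)).
  rewrite Rmult_assoc. eapply Rle_trans; [apply vnorm_matvec_le | exact H].
Qed.

Lemma opnorm_add : forall k M N, opnorm k (mat_add M N) <= opnorm k M + opnorm k N.
Proof.
  intros. apply opnorm_le. pose proof (opnorm_ge0 k M); pose proof (opnorm_ge0 k N); lra. intros.
  erewrite vnorm_ext by (intros; apply matvec_add).
  pose proof (vnorm_add k (matvec k M v) (matvec k N v)).
  pose proof (vnorm_matvec_le k M v). pose proof (vnorm_matvec_le k N v). lra.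
Qed.

Lemma mat_id_diag : forall k i j, (i < k)%nat -> mat_id k i j = if Nat.eqb i j then C1 else C0.
Proof. intros. unfold mat_id. rewrite (proj2 (Nat.ltb_lt _ _) H). reflexivity. Qed.

Lemma matvec_id : forall k v i, (i<k)%nat -> matvec k (mat_id k) v i = v i.
Proof.
  intros. unfold matvec. rewrite (Csum_single k _ i H).
  - rewrite mat_id_diag, Nat.eqb_refl by auto. Cring.
  - intros j Hj Hne. rewrite mat_id_diag by auto.
    replace (Nat.eqb i j) with false by (symmetry; apply Nat.eqb_neq; auto). Cring.
Qed.

Lemma opnorm_scalid : forall k c, opnorm k (mat_scal c (mat_id k)) <= Cnorm c.
Proof.
  intros. apply opnorm_le. apply Cnorm_ge0. intros. rewrite <- vnorm_scal. right. apply vnorm_ext.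
  intros i Hi. rewrite <- (matvec_id k v i Hi). unfold matvec, mat_scal.
  rewrite <- Csum_mull. apply Csum_ext; intros; Cring.
Qed.

Lemma opnorm_zero : forall k M, (forall i j, M i j = C0) -> opnorm k M = 0.
Proof.
  intros. apply Rle_antisym; [|apply opnorm_ge0]. apply opnorm_le. lra. intros.
  rewrite vnorm_zero. lra. intros; unfold matvec. apply Csum_zero; intros. rewrite H; Cring.
Qed.

Definition ebasis (b : nat) : nat -> C := fun j => if Nat.eqb j b then C1 else C0.

Lemma vnorm_ebasis : forall k b, (b<k)%nat -> vnorm k (ebasis b) = 1.
Proof.
  intros. unfold vnorm. rewrite <- sqrt_1. f_equal.
  rewrite (Rsum_single k _ b H). unfold ebasis; rewrite Nat.eqb_refl, Cnorm_C1; ring.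
  intros. unfold ebasis. replace (Nat.eqb j b) with false by (symmetry; apply Nat.eqb_neq; lia). rewrite Cnorm_C0; ring.
Qed.

Lemma matvec_ebasis : forall k M b i, (b<k)%nat -> matvec k M (ebasis b) i = M i b.
Proof.
  intros. unfold matvec. rewrite (Csum_single k _ b H).
  - unfold ebasis; rewrite Nat.eqb_refl. Cring.
  - intros. unfold ebasis. replace (Nat.eqb j b) with false by (symmetry; apply Nat.eqb_neq; lia). Cring.
Qed.

Lemma entry_le_opnorm : forall k M i j, (i<k)%nat -> (j<k)%nat -> Cnorm (M i j) <= opnorm k M.
Proof.
  intros. pose proof (vnorm_matvec_le k M (ebasis j)). rewrite vnorm_ebasis in H1 by auto.
  pose proof (vnorm_comp_le k (matvec k M (ebasis j)) i H). rewrite matvec_ebasis in H2 by auto. lra.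
Qed.

(** * Matrix algebra *)

Lemma inv_INR_ge0 : forall k, 0 <= / INR k.
Proof. intros. destruct k. simpl; rewrite Rinv_0; lra. apply Rlt_le, Rinv_0_lt_compat, lt_0_INR; lia. Qed.

Lemma mat_eq : forall M N : Mat, (forall i j, M i j = N i j) -> M = N.
Proof. intros. extensionality i; extensionality j; auto. Qed.

Lemma mat_mul_assoc : forall k A B D, mat_mul k (mat_mul k A B) D = mat_mul k A (mat_mul k B D).
Proof.
  intros; apply mat_eq; intros i j; unfold mat_mul.
  rewrite (Csum_ext k _ (fun l => Csum k (fun m => Cmul (A i m) (Cmul (B m l) (D l j))))).
  rewrite Csum_exch. apply Csum_ext; intros. rewrite Csum_mull; auto.
  intros. rewrite <- Csum_mulr. apply Csum_ext; intros; Cring.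
Qed.

Lemma mat_adj_mul : forall k A B, mat_adj (mat_mul k A B) = mat_mul k (mat_adj B) (mat_adj A).
Proof.
  intros; apply mat_eq; intros i j; unfold mat_adj, mat_mul. rewrite <- Csum_conj.
  apply Csum_ext; intros; Cring.
Qed.

Lemma mat_adj_adj : forall M, mat_adj (mat_adj M) = M.
Proof. intros; apply mat_eq; intros; unfold mat_adj; Cring. Qed.

Lemma mat_mul_addl : forall k A B D, mat_mul k (mat_add A B) D = mat_add (mat_mul k A D) (mat_mul k B D).
Proof. intros; apply mat_eq; intros; unfold mat_mul, mat_add. rewrite <- Csum_add. apply Csum_ext; intros; Cring. Qed.
Lemma mat_mul_addr : forall k A B D, mat_mul k D (mat_add A B) = mat_add (mat_mul k D A) (mat_mul k D B).
Proof. intros; apply mat_eq; intros; unfold mat_mul, mat_add. rewrite <- Csum_add. apply Csum_ext; intros; Cring. Qed.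
Lemma mat_mul_subl : forall k A B D, mat_mul k (mat_sub A B) D = mat_sub (mat_mul k A D) (mat_mul k B D).
Proof. intros; apply mat_eq; intros; unfold mat_mul, mat_sub. rewrite <- Csum_opp, <- Csum_add. apply Csum_ext; intros; Cring. Qed.
Lemma mat_mul_subr : forall k A B D, mat_mul k D (mat_sub A B) = mat_sub (mat_mul k D A) (mat_mul k D B).
Proof. intros; apply mat_eq; intros; unfold mat_mul, mat_sub. rewrite <- Csum_opp, <- Csum_add. apply Csum_ext; intros; Cring. Qed.
Lemma mat_mul_scall : forall k c A B, mat_mul k (mat_scal c A) B = mat_scal c (mat_mul k A B).
Proof. intros; apply mat_eq; intros; unfold mat_mul, mat_scal. rewrite <- Csum_mull. apply Csum_ext; intros; Cring. Qed.
Lemma mat_mul_scalr : forall k c A B, mat_mul k A (mat_scal c B) = mat_scal c (mat_mul k A B).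
Proof. intros; apply mat_eq; intros; unfold mat_mul, mat_scal. rewrite <- Csum_mull. apply Csum_ext; intros; Cring. Qed.

Lemma mat_id_wf : forall k, mat_wf k (mat_id k).
Proof. intros k i j H. unfold mat_id. destruct (Nat.ltb i k) eqn:E; simpl; auto.
  destruct (Nat.eqb i j) eqn:E2; auto. apply Nat.ltb_lt in E. apply Nat.eqb_eq in E2. lia. Qed.

Lemma mat_mul_wf : forall k A B, mat_wf k A -> mat_wf k B -> mat_wf k (mat_mul k A B).
Proof.
  intros k A B HA HB i j H. unfold mat_mul. apply Csum_zero; intros l Hl.
  destruct H. rewrite HA by auto; Cring. rewrite HB by auto; Cring.
Qed.
Lemma mat_add_wf : forall k A B, mat_wf k A -> mat_wf k B -> mat_wf k (mat_add A B).
Proof. intros k A B HA HB i j H. unfold mat_add. rewrite HA, HB by auto; Cring. Qed.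
Lemma mat_scal_wf : forall k c A, mat_wf k A -> mat_wf k (mat_scal c A).
Proof. intros k c A HA i j H. unfold mat_scal. rewrite HA by auto; Cring. Qed.
Lemma mat_adj_wf : forall k A, mat_wf k A -> mat_wf k (mat_adj A).
Proof. intros k A HA i j H. unfold mat_adj. rewrite HA by tauto; Cring. Qed.

Lemma mat_id_l : forall k M, mat_wf k M -> mat_mul k (mat_id k) M = M.
Proof.
  intros k M HM; apply mat_eq; intros i j. unfold mat_mul. destruct (Nat.lt_ge_cases i k).
  - rewrite (Csum_single k _ i H). unfold mat_id. rewrite (proj2 (Nat.ltb_lt _ _) H), Nat.eqb_refl; simpl; Cring.
    intros l Hl Hne. unfold mat_id. rewrite (proj2 (Nat.ltb_lt _ _) H).
    replace (Nat.eqb i l) with false by (symmetry; apply Nat.eqb_neq; auto). simpl; Cring.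
  - rewrite HM by auto. apply Csum_zero; intros. unfold mat_id.
    replace (Nat.ltb i k) with false by (symmetry; apply Nat.ltb_ge; auto). simpl; Cring.
Qed.

Lemma mat_id_r : forall k M, mat_wf k M -> mat_mul k M (mat_id k) = M.
Proof.
  intros k M HM; apply mat_eq; intros i j. unfold mat_mul. destruct (Nat.lt_ge_cases j k).
  - rewrite (Csum_single k _ j H). unfold mat_id. rewrite (proj2 (Nat.ltb_lt _ _) H), Nat.eqb_refl; simpl; Cring.
    intros l Hl Hne. unfold mat_id. rewrite (proj2 (Nat.ltb_lt _ _) Hl).
    replace (Nat.eqb l j) with false by (symmetry; apply Nat.eqb_neq; auto). simpl; Cring.
  - rewrite HM by auto. apply Csum_zero; intros l Hl. unfold mat_id. rewrite (proj2 (Nat.ltb_lt _ _) Hl).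
    replace (Nat.eqb l j) with false by (symmetry; apply Nat.eqb_neq; lia). simpl; Cring.
Qed.

Lemma mat_adj_id : forall k, mat_adj (mat_id k) = mat_id k.
Proof.
  intros; apply mat_eq; intros i j. unfold mat_adj, mat_id.
  destruct (Nat.eqb j i) eqn:E.
  - apply Nat.eqb_eq in E; subst. rewrite Nat.eqb_refl. destruct (Nat.ltb i k); simpl; Cring.
  - replace (Nat.eqb i j) with false. destruct (Nat.ltb i k), (Nat.ltb j k); simpl; Cring.
    symmetry; apply Nat.eqb_neq; apply Nat.eqb_neq in E; auto.
Qed.

Lemma mat_adj_scal : forall c M, mat_adj (mat_scal c M) = mat_scal (Cconj c) (mat_adj M).
Proof. intros; apply mat_eq; intros; unfold mat_adj, mat_scal; Cring. Qed.
Lemma mat_adj_add : forall M N, mat_adj (mat_add M N) = mat_add (mat_adj M) (mat_adj N).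
Proof. intros; apply mat_eq; intros; unfold mat_adj, mat_add; Cring. Qed.

(** * Unitary conjugation *)

Definition conjW (k : nat) (W M : Mat) : Mat := mat_mul k (mat_mul k W M) (mat_adj W).

Lemma unitary_adj : forall k W, mat_unitary k W -> mat_unitary k (mat_adj W).
Proof.
  intros k W [H1 [H2 H3]]. split; [apply mat_adj_wf; auto|]. rewrite mat_adj_adj. auto.
Qed.

Lemma unitary_mul : forall k W V, mat_unitary k W -> mat_unitary k V -> mat_unitary k (mat_mul k W V).
Proof.
  intros k W V [W1 [W2 W3]] [V1 [V2 V3]]. split; [apply mat_mul_wf; auto|]. rewrite mat_adj_mul. split.
  - rewrite mat_mul_assoc, <- (mat_mul_assoc k (mat_adj W)), W2, mat_id_l by auto. auto.
  - rewrite mat_mul_assoc, <- (mat_mul_assoc k V), V3, mat_id_l by (apply mat_adj_wf; auto). auto.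
Qed.

Lemma unitary_id : forall k, mat_unitary k (mat_id k).
Proof. intros. split. apply mat_id_wf. rewrite mat_adj_id, mat_id_l by apply mat_id_wf. auto. Qed.

Lemma conjW_id : forall k M, mat_wf k M -> conjW k (mat_id k) M = M.
Proof. intros; unfold conjW. rewrite mat_adj_id, mat_id_l, mat_id_r; auto. Qed.

Lemma conjW_comp : forall k W V M, conjW k W (conjW k V M) = conjW k (mat_mul k W V) M.
Proof. intros; unfold conjW. rewrite mat_adj_mul. rewrite !mat_mul_assoc. auto. Qed.

Lemma conjW_inv : forall k V M, mat_unitary k V -> mat_wf k M -> conjW k (mat_adj V) (conjW k V M) = M.
Proof.
  intros k V M [V1 [V2 V3]] HM. rewrite conjW_comp, V2. apply conjW_id; auto.
Qed.

Lemma conjW_mul : forall k W A B, mat_unitary k W -> mat_wf k B ->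
  mat_mul k (conjW k W A) (conjW k W B) = conjW k W (mat_mul k A B).
Proof.
  intros k W A B [W1 [W2 W3]] HB. unfold conjW. rewrite !mat_mul_assoc.
  rewrite <- (mat_mul_assoc k (mat_adj W) W), W2, mat_id_l by (apply mat_mul_wf; auto; apply mat_adj_wf; auto). auto.
Qed.

Lemma conjW_add : forall k W A B, conjW k W (mat_add A B) = mat_add (conjW k W A) (conjW k W B).
Proof. intros; unfold conjW. rewrite mat_mul_addr, mat_mul_addl. auto. Qed.
Lemma conjW_sub : forall k W A B, conjW k W (mat_sub A B) = mat_sub (conjW k W A) (conjW k W B).
Proof. intros; unfold conjW. rewrite mat_mul_subr, mat_mul_subl. auto. Qed.

Lemma conjW_scalid : forall k W c, mat_unitary k W -> conjW k W (mat_scal c (mat_id k)) = mat_scal c (mat_id k).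
Proof.
  intros k W c [W1 [W2 W3]]. unfold conjW. rewrite mat_mul_scalr, mat_mul_scall, mat_id_r by auto. rewrite W3. auto.
Qed.

Lemma conjW_wf : forall k W M, mat_wf k W -> mat_wf k M -> mat_wf k (conjW k W M).
Proof. intros. unfold conjW. apply mat_mul_wf. apply mat_mul_wf; auto. apply mat_adj_wf; auto. Qed.

Lemma conjW_adj : forall k W M, mat_adj (conjW k W M) = conjW k W (mat_adj M).
Proof. intros; unfold conjW. rewrite !mat_adj_mul, mat_adj_adj, mat_mul_assoc. auto. Qed.

Definition ip (k : nat) (u v : nat -> C) : C := Csum k (fun i => Cmul (Cconj (u i)) (v i)).

Lemma ip_self : forall k v, Re (ip k v v) = vnorm k v ^ 2.
Proof. intros. unfold ip. rewrite Re_Csum, vnorm_sq. apply Rsum_ext; intros. rewrite Re_conj_mul; ring. Qed.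

Lemma ip_adj : forall k M u w, ip k (matvec k M u) w = ip k u (matvec k (mat_adj M) w).
Proof.
  intros. unfold ip, matvec, mat_adj.
  rewrite (Csum_ext k _ (fun i => Csum k (fun j => Cmul (Cconj (u j)) (Cmul (Cconj (M i j)) (w i))))).
  rewrite Csum_exch. apply Csum_ext; intros. rewrite Csum_mull. auto.
  intros. rewrite <- Csum_conj, <- Csum_mulr. apply Csum_ext; intros; Cring.
Qed.

Lemma ip_ext : forall k u v w, (forall i, (i<k)%nat -> v i = w i) -> ip k u v = ip k u w.
Proof. intros; unfold ip; apply Csum_ext; intros; rewrite H; auto. Qed.

Lemma isometry_vnorm : forall k W v, mat_mul k (mat_adj W) W = mat_id k -> vnorm k (matvec k W v) = vnorm k v.
Proof.
  intros. assert (vnorm k (matvec k W v) ^ 2 = vnorm k v ^ 2).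
  { rewrite <- !ip_self, ip_adj. f_equal. apply ip_ext; intros. rewrite <- matvec_mul, H, matvec_id; auto. }
  pose proof (vnorm_ge0 k (matvec k W v)); pose proof (vnorm_ge0 k v).
  simpl in H0. nra.
Qed.

Lemma unitary_vnorm : forall k W v, mat_unitary k W -> vnorm k (matvec k W v) = vnorm k v.
Proof. intros k W v [_ [H _]]. apply isometry_vnorm; auto. Qed.

Lemma opnorm_conjW : forall k W M, mat_unitary k W -> opnorm k (conjW k W M) <= opnorm k M.
Proof.
  intros. apply opnorm_le. apply opnorm_ge0. intros. unfold conjW. rewrite mat_mul_assoc.
  rewrite (vnorm_ext k _ (matvec k W (matvec k M (matvec k (mat_adj W) v)))).
  2:{ intros. rewrite matvec_mul. apply Csum_ext; intros. rewrite matvec_mul; auto. }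
  rewrite unitary_vnorm by auto.
  pose proof (vnorm_matvec_le k M (matvec k (mat_adj W) v)).
  rewrite (unitary_vnorm k (mat_adj W) v) in H0 by (apply unitary_adj; auto). exact H0.
Qed.

(** * The normalized Hilbert-Schmidt norm ||M||_2 = tau_k(M^* M)^(1/2) *)

Definition colv (M : Mat) (b : nat) : nat -> C := fun i => M i b.
Definition hs (k : nat) (M : Mat) : R := sqrt (Rsum k (fun b => vnorm k (colv M b) ^ 2)).
Definition mnorm2 (k : nat) (M : Mat) : R := sqrt (/ INR k) * hs k M.

Lemma hs_ge0 : forall k M, 0 <= hs k M.
Proof. intros; apply sqrt_pos. Qed.
Lemma mnorm2_ge0 : forall k M, 0 <= mnorm2 k M.
Proof. intros; apply Rmult_le_pos; apply sqrt_pos. Qed.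

Lemma hs_sq : forall k M, hs k M ^ 2 = Rsum k (fun b => Rsum k (fun i => Cnorm (M i b) ^ 2)).
Proof.
  intros. unfold hs. rewrite sqrt_sq_eq by (apply Rsum_nonneg; intros; apply pow2_ge_0).
  apply Rsum_ext; intros. rewrite vnorm_sq. auto.
Qed.

Lemma mnorm2_sq : forall k M, mnorm2 k M ^ 2 = / INR k * Rsum k (fun b => Rsum k (fun i => Cnorm (M i b) ^ 2)).
Proof. intros. unfold mnorm2. rewrite Rpow_mult_distr, sqrt_sq_eq, hs_sq by apply inv_INR_ge0. auto. Qed.

Lemma hs_ext : forall k M N, (forall i j, (i<k)%nat -> (j<k)%nat -> M i j = N i j) -> hs k M = hs k N.
Proof. intros. unfold hs. f_equal. apply Rsum_ext; intros. f_equal. apply vnorm_ext; intros. unfold colv; auto. Qed.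
Lemma mnorm2_ext : forall k M N, (forall i j, (i<k)%nat -> (j<k)%nat -> M i j = N i j) -> mnorm2 k M = mnorm2 k N.
Proof. intros. unfold mnorm2. erewrite hs_ext; eauto. Qed.

Lemma hs_add : forall k M N, hs k (mat_add M N) <= hs k M + hs k N.
Proof.
  intros; unfold hs. apply Rsum_minkowski. intros; split. apply vnorm_ge0. apply vnorm_add.
Qed.
Lemma mnorm2_add : forall k M N, mnorm2 k (mat_add M N) <= mnorm2 k M + mnorm2 k N.
Proof. intros. unfold mnorm2. pose proof (hs_add k M N). pose proof (sqrt_pos (/INR k)).
  rewrite <- Rmult_plus_distr_l. apply Rmult_le_compat_l; auto. Qed.

Lemma hs_mul_l : forall k X Y, hs k (mat_mul k X Y) <= opnorm k X * hs k Y.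
Proof.
  intros. unfold hs. rewrite <- (sqrt_pow2 (opnorm k X)) by apply opnorm_ge0.
  rewrite <- sqrt_mult by (apply pow2_ge_0 || (apply Rsum_nonneg; intros; apply pow2_ge_0)).
  apply sqrt_le_1_alt. rewrite <- Rsum_scal. apply Rsum_le; intros b Hb.
  assert (E : vnorm k (colv (mat_mul k X Y) b) = vnorm k (matvec k X (colv Y b))).
  { apply vnorm_ext; intros. unfold colv, mat_mul, matvec; auto. }
  rewrite E. pose proof (vnorm_matvec_le k X (colv Y b)). pose proof (vnorm_ge0 k (matvec k X (colv Y b))).
  rewrite <- Rpow_mult_distr. apply pow_incr; split; auto.
Qed.

Lemma hs_adj : forall k M, hs k (mat_adj M) = hs k M.
Proof.
  intros. apply sq_eq_nonneg; try apply hs_ge0. rewrite !hs_sq. rewrite Rsum_exch.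
  apply Rsum_ext; intros; apply Rsum_ext; intros. unfold mat_adj. rewrite Cnorm_conj; auto.
Qed.

Lemma hs_mul_r : forall k X Y, hs k (mat_mul k X Y) <= hs k X * opnorm k (mat_adj Y).
Proof.
  intros. rewrite <- hs_adj, mat_adj_mul. rewrite <- (hs_adj k X), Rmult_comm. apply hs_mul_l.
Qed.

Lemma hs_isom_l : forall k W M, mat_unitary k W -> hs k (mat_mul k W M) = hs k M.
Proof.
  intros. unfold hs. f_equal. apply Rsum_ext; intros. f_equal.
  rewrite <- (unitary_vnorm k W (colv M i)) by auto. apply vnorm_ext; intros. unfold colv, mat_mul, matvec; auto.
Qed.

Lemma hs_conjW : forall k W M, mat_unitary k W -> hs k (conjW k W M) = hs k M.
Proof.
  intros. unfold conjW. rewrite mat_mul_assoc, hs_isom_l by auto.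
  rewrite <- hs_adj, mat_adj_mul, mat_adj_adj, hs_isom_l, hs_adj by auto. auto.
Qed.

Lemma hs_le_opnorm : forall k M, hs k M ^ 2 <= INR k * opnorm k M ^ 2.
Proof.
  intros. unfold hs. rewrite sqrt_sq_eq by (apply Rsum_nonneg; intros; apply pow2_ge_0).
  rewrite <- Rsum_const. apply Rsum_le; intros b Hb. apply pow_incr. split. apply vnorm_ge0.
  pose proof (vnorm_matvec_le k M (ebasis b)). rewrite vnorm_ebasis in H by auto.
  erewrite vnorm_ext. rewrite Rmult_1_r in H; exact H. intros; unfold colv; rewrite matvec_ebasis; auto.
Qed.

Lemma mnorm2_le_opnorm : forall k M, (1 <= k)%nat -> mnorm2 k M <= opnorm k M.
Proof.
  intros. assert (Hk : 0 < INR k) by (apply lt_0_INR; lia).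
  apply Rsqr_incr_0_var; [| apply opnorm_ge0]. unfold Rsqr.
  pose proof (hs_le_opnorm k M). unfold mnorm2.
  replace (sqrt (/ INR k) * hs k M * (sqrt (/ INR k) * hs k M)) with ((sqrt (/ INR k) * sqrt (/ INR k)) * hs k M ^ 2) by ring.
  rewrite sqrt_sqrt by apply inv_INR_ge0.
  apply Rmult_le_reg_l with (INR k); auto. rewrite <- Rmult_assoc, Rinv_r, Rmult_1_l by lra. simpl in *. nra.
Qed.

Lemma mnorm2_mul_l : forall k X Y, mnorm2 k (mat_mul k X Y) <= opnorm k X * mnorm2 k Y.
Proof. intros; unfold mnorm2. pose proof (hs_mul_l k X Y). pose proof (sqrt_pos (/ INR k)).
  rewrite (Rmult_comm (opnorm k X)), Rmult_assoc. apply Rmult_le_compat_l; auto. lra. Qed.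
Lemma mnorm2_mul_r : forall k X Y, mnorm2 k (mat_mul k X Y) <= mnorm2 k X * opnorm k (mat_adj Y).
Proof. intros; unfold mnorm2. pose proof (hs_mul_r k X Y). pose proof (sqrt_pos (/ INR k)).
  rewrite Rmult_assoc. apply Rmult_le_compat_l; auto. Qed.
Lemma mnorm2_conjW : forall k W M, mat_unitary k W -> mnorm2 k (conjW k W M) = mnorm2 k M.
Proof. intros; unfold mnorm2; rewrite hs_conjW; auto. Qed.

Lemma mnorm2_opp_sub : forall k M N, mnorm2 k (mat_sub M N) = mnorm2 k (mat_sub N M).
Proof.
  intros. unfold mnorm2, hs. do 2 f_equal. apply Rsum_ext; intros; f_equal. unfold vnorm. f_equal.
  apply Rsum_ext; intros. unfold colv, mat_sub. rewrite <- Cnorm_opp. f_equal. f_equal. Cring.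
Qed.

(** * The distance ||(A_i) - (B_i)||_2 between n-tuples *)

Definition tdist (k n : nat) (As Bs : nat -> Mat) : R :=
  sqrt (Rsum n (fun i => mnorm2 k (mat_sub (As i) (Bs i)) ^ 2)).

Lemma tdist_sym : forall k n As Bs, tdist k n As Bs = tdist k n Bs As.
Proof. intros; unfold tdist; f_equal; apply Rsum_ext; intros; rewrite mnorm2_opp_sub; auto. Qed.

Lemma tdist_tri : forall k n As Bs Cs, tdist k n As Cs <= tdist k n As Bs + tdist k n Bs Cs.
Proof.
  intros; unfold tdist. apply Rsum_minkowski. intros; split. apply mnorm2_ge0.
  rewrite (mnorm2_ext k _ (mat_add (mat_sub (As i) (Bs i)) (mat_sub (Bs i) (Cs i)))).
  apply mnorm2_add. intros; unfold mat_sub, mat_add; Cring.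
Qed.

Lemma tdist_conjW : forall k n W As Bs, mat_unitary k W ->
  tdist k n (fun i => conjW k W (As i)) (fun i => conjW k W (Bs i)) = tdist k n As Bs.
Proof. intros; unfold tdist; f_equal; apply Rsum_ext; intros. rewrite <- conjW_sub, mnorm2_conjW; auto. Qed.

Lemma tdist_le_sum : forall k n As Bs, tdist k n As Bs <= Rsum n (fun i => mnorm2 k (mat_sub (As i) (Bs i))).
Proof. intros; unfold tdist. apply sqrt_Rsum_le_sum. intros; apply mnorm2_ge0. Qed.

Lemma tdist_comp_le : forall k n As Bs i, (i<n)%nat -> mnorm2 k (mat_sub (As i) (Bs i)) <= tdist k n As Bs.
Proof.
  intros. unfold tdist. rewrite <- (sqrt_pow2 (mnorm2 k _)) by apply mnorm2_ge0.
  apply sqrt_le_1_alt. apply (Rsum_term_le n (fun i => mnorm2 k (mat_sub (As i) (Bs i)) ^ 2)); auto.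
  intros; apply pow2_ge_0.
Qed.

Lemma tdist_ext : forall k n As Bs As' Bs',
  (forall i a b, (i<n)%nat -> (a<k)%nat -> (b<k)%nat -> As i a b = As' i a b /\ Bs i a b = Bs' i a b) ->
  tdist k n As Bs = tdist k n As' Bs'.
Proof.
  intros; unfold tdist; f_equal; apply Rsum_ext; intros; f_equal. apply mnorm2_ext; intros.
  unfold mat_sub. destruct (H i i0 j); auto. rewrite H3, H4; auto.
Qed.

Lemma orbit_dist_tdist : forall k n As Bs W,
  orbit_dist k n As Bs W = tdist k n As (fun i => conjW k W (Bs i)).
Proof.
  intros. unfold orbit_dist, tdist. f_equal. apply Rsum_ext; intros i Hi.
  rewrite mnorm2_sq. unfold conjW. set (D := mat_sub (As i) (mat_mul k (mat_mul k W (Bs i)) (mat_adj W))).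
  unfold tau. cbv zeta. fold D. simpl Re. rewrite Re_Csum. simpl Im. rewrite Rmult_0_l, Rminus_0_r. f_equal.
  apply Rsum_ext; intros b Hb. unfold mat_mul. rewrite Re_Csum. apply Rsum_ext; intros.
  unfold mat_adj. rewrite Re_conj_mul. ring.
Qed.


(** * Noncommutative polynomials: substitution and formal adjoint *)

Fixpoint psubst {K : Type} (P : ncpoly K) (Q : nat -> ncpoly K) : ncpoly K :=
  match P with
  | NCvar i => Q i
  | NCconst c => NCconst c
  | NCadd p q => NCadd (psubst p Q) (psubst q Q)
  | NCmul p q => NCmul (psubst p Q) (psubst q Q)
  end.

(* padj cj P is the formal adjoint of P for a coefficient conjugation cj: it
   reverses products, and evaluates to the adjoint at self-adjoint arguments. *)
Fixpoint padj {K : Type} (cj : K -> K) (P : ncpoly K) : ncpoly K :=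
  match P with
  | NCvar i => NCvar i
  | NCconst c => NCconst (cj c)
  | NCadd p q => NCadd (padj cj p) (padj cj q)
  | NCmul p q => NCmul (padj cj q) (padj cj p)
  end.

Definition qconj (q : QC) : QC := (fst q, Qopp (snd q)).

Lemma QC2C_conj : forall q, QC2C (qconj q) = Cconj (QC2C q).
Proof. intros [a b]; unfold QC2C, qconj, Cconj; simpl. rewrite Q2R_opp; auto. Qed.

Lemma ncmap_psubst : forall {K L} (f : K -> L) P Q, ncmap f (psubst P Q) = psubst (ncmap f P) (fun i => ncmap f (Q i)).
Proof. induction P; intros; simpl; try rewrite IHP1, IHP2; auto. Qed.

Lemma ncmap_padj : forall P, ncmap QC2C (padj qconj P) = padj Cconj (ncmap QC2C P).
Proof. induction P; simpl; try rewrite IHP1, IHP2; auto. rewrite QC2C_conj; auto. Qed.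

Lemma vars_lt_ncmap : forall {K L} (f : K -> L) N P, vars_lt N P -> vars_lt N (ncmap f P).
Proof. induction P; simpl; intuition. Qed.

Lemma vars_lt_psubst : forall {K} M N (P : ncpoly K) Q, vars_lt M P -> (forall i, (i<M)%nat -> vars_lt N (Q i)) -> vars_lt N (psubst P Q).
Proof. induction P; simpl; intuition. Qed.

Lemma vars_lt_padj : forall {K} cj N (P : ncpoly K), vars_lt N P -> vars_lt N (padj cj P).
Proof. induction P; simpl; intuition. Qed.

(** * Evaluation of polynomials in matrices *)

Definition tuple_allwf (k : nat) (As : nat -> Mat) : Prop := forall i, mat_wf k (As i).

Lemma tuple_wf_allwf : forall k n As, tuple_wf k n As -> tuple_allwf k As.
Proof.
  intros k n As [H1 H2] i. destruct (Nat.lt_ge_cases i n). auto. intros a b _. apply H2; auto.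
Qed.

Lemma meval_wf : forall k As P, tuple_allwf k As -> mat_wf k (meval k As P).
Proof.
  induction P; intros; simpl; auto.
  apply mat_scal_wf, mat_id_wf. apply mat_add_wf; auto. apply mat_mul_wf; auto.
Qed.

Lemma meval_ext : forall k N As Bs P, vars_lt N P -> (forall i, (i<N)%nat -> As i = Bs i) -> meval k As P = meval k Bs P.
Proof. induction P; simpl; intros; auto; destruct H; rewrite IHP1, IHP2 by auto; auto. Qed.

Lemma meval_psubst : forall k As P Q, meval k As (psubst P Q) = meval k (fun i => meval k As (Q i)) P.
Proof. induction P; intros; simpl; try rewrite IHP1, IHP2; auto. Qed.

Lemma meval_conjW : forall k W As P, mat_unitary k W -> tuple_allwf k As ->
  meval k (fun i => conjW k W (As i)) P = conjW k W (meval k As P).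
Proof.
  induction P; intros; simpl; auto.
  - rewrite conjW_scalid; auto.
  - rewrite IHP1, IHP2, conjW_add; auto.
  - rewrite IHP1, IHP2, conjW_mul; auto. apply meval_wf; auto.
Qed.

Definition tuple_sa (As : nat -> Mat) : Prop := forall i, mat_adj (As i) = As i.

Lemma meval_adj : forall k As P, tuple_sa As -> mat_adj (meval k As P) = meval k As (padj Cconj P).
Proof.
  induction P; intros; simpl; auto.
  - rewrite mat_adj_scal, mat_adj_id; auto.
  - rewrite mat_adj_add, IHP1, IHP2; auto.
  - rewrite mat_adj_mul, IHP1, IHP2; auto.
Qed.

Fixpoint pbound (Rb : R) (P : ncpoly C) : R :=
  match P with
  | NCvar _ => Rb
  | NCconst c => Cnorm c
  | NCadd p q => pbound Rb p + pbound Rb q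
  | NCmul p q => pbound Rb p * pbound Rb q
  end.

Lemma pbound_ge0 : forall Rb P, 0 <= Rb -> 0 <= pbound Rb P.
Proof. induction P; simpl; intros; auto. apply Cnorm_ge0.
  pose proof (IHP1 H); pose proof (IHP2 H); lra. apply Rmult_le_pos; auto. Qed.

Lemma pbound_padj : forall Rb P, pbound Rb (padj Cconj P) = pbound Rb P.
Proof. induction P; simpl; auto. apply Cnorm_conj. rewrite IHP1, IHP2; auto. rewrite IHP1, IHP2; ring. Qed.

Lemma meval_opnorm : forall k As Rb P, 0 <= Rb -> (forall i, opnorm k (As i) <= Rb) ->
  opnorm k (meval k As P) <= pbound Rb P.
Proof.
  induction P; intros; simpl; auto.
  - apply opnorm_scalid.
  - pose proof (opnorm_add k (meval k As P1) (meval k As P2)). pose proof (IHP1 H H0); pose proof (IHP2 H H0). lra.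
  - pose proof (opnorm_mul k (meval k As P1) (meval k As P2)). pose proof (IHP1 H H0); pose proof (IHP2 H H0).
    pose proof (opnorm_ge0 k (meval k As P1)); pose proof (opnorm_ge0 k (meval k As P2)).
    eapply Rle_trans; [exact H1|]. apply Rmult_le_compat; auto.
Qed.

(* plip Rb P is a Lipschitz constant of A |-> P(A) for the distance ||.||_2 on
   tuples with operator norms at most Rb (meval_lip). *)
Fixpoint plip (Rb : R) (P : ncpoly C) : R :=
  match P with
  | NCvar _ => 1
  | NCconst c => 0
  | NCadd p q => plip Rb p + plip Rb q
  | NCmul p q => pbound Rb p * plip Rb q + plip Rb p * pbound Rb q
  end.

Lemma plip_ge0 : forall Rb P, 0 <= Rb -> 0 <= plip Rb P.
Proof. induction P; simpl; intros. lra. lra. apply Rplus_le_le_0_compat; auto.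
  apply Rplus_le_le_0_compat; apply Rmult_le_pos; auto using pbound_ge0. Qed.

Lemma mnorm2_zero : forall k M, (forall i j, M i j = C0) -> mnorm2 k M = 0.
Proof. intros. unfold mnorm2, hs. rewrite (Rsum_ext k _ (fun _ => 0)). rewrite Rsum_zero, sqrt_0; ring.
  intros. rewrite vnorm_zero. simpl; ring. intros; unfold colv; auto. Qed.

(* Lipschitz estimate ||P(A) - P(B)||_2 <= plip Rb P * ||A - B||_2 for operator-norm
   bounded tuples; B self-adjoint is used to bound ||P(B)^*||.  The product case
   rests on PQ(A) - PQ(B) = P(A)(Q(A) - Q(B)) + (P(A) - P(B))Q(B). *)
Lemma meval_lip : forall k N As Bs Rb P, 0 <= Rb -> vars_lt N P ->
  tuple_allwf k As -> tuple_allwf k Bs -> tuple_sa Bs ->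
  (forall i, opnorm k (As i) <= Rb) -> (forall i, opnorm k (Bs i) <= Rb) ->
  mnorm2 k (mat_sub (meval k As P) (meval k Bs P)) <= plip Rb P * tdist k N As Bs.
Proof.
  induction P as [i|c|P1 IH1 P2 IH2|P1 IH1 P2 IH2]; intros HR HV HA HB HS HoA HoB; simpl in *.
  - rewrite Rmult_1_l. apply tdist_comp_le; auto.
  - rewrite mnorm2_zero. lra. intros; unfold mat_sub; Cring.
  - destruct HV as [V1 V2].
    rewrite (mnorm2_ext k _ (mat_add (mat_sub (meval k As P1) (meval k Bs P1)) (mat_sub (meval k As P2) (meval k Bs P2))))
      by (intros; unfold mat_sub, mat_add; Cring).
    eapply Rle_trans; [apply mnorm2_add|]. rewrite Rmult_plus_distr_r.
    apply Rplus_le_compat; auto.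
  - destruct HV as [V1 V2].
    set (pA := meval k As P1). set (qA := meval k As P2). set (pB := meval k Bs P1). set (qB := meval k Bs P2).
    assert (Hsplit : mnorm2 k (mat_sub (mat_mul k pA qA) (mat_mul k pB qB)) <=
                     opnorm k pA * mnorm2 k (mat_sub qA qB) + mnorm2 k (mat_sub pA pB) * opnorm k (mat_adj qB)).
    { rewrite (mnorm2_ext k _ (mat_add (mat_mul k pA (mat_sub qA qB)) (mat_mul k (mat_sub pA pB) qB)))
        by (intros; rewrite mat_mul_subr, mat_mul_subl; unfold mat_sub, mat_add; Cring).
      eapply Rle_trans; [apply mnorm2_add|].
      apply Rplus_le_compat; [apply mnorm2_mul_l | apply mnorm2_mul_r]. }
    assert (Hp : opnorm k pA <= pbound Rb P1) by (unfold pA; apply meval_opnorm; auto).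
    assert (Hq : opnorm k (mat_adj qB) <= pbound Rb P2).
    { unfold qB. rewrite meval_adj by auto. rewrite <- (pbound_padj Rb P2). apply meval_opnorm; auto. }
    eapply Rle_trans; [exact Hsplit|].
    apply Rle_trans with (pbound Rb P1 * (plip Rb P2 * tdist k N As Bs) + plip Rb P1 * tdist k N As Bs * pbound Rb P2);
      [|right; ring].
    apply Rplus_le_compat; apply Rmult_le_compat; auto using opnorm_ge0, mnorm2_ge0.
Qed.

(** * Elementary algebra in a unital C*-algebra *)

Notation "a +A b" := (caadd _ a b) (at level 50, left associativity).
Notation "-A a" := (caopp _ a) (at level 35, right associativity).
Notation "a -A b" := (caadd _ a (caopp _ b)) (at level 50, left associativity).
Notation "a *A b" := (camul _ a b) (at level 40, left associativity).
Notation "c .A a" := (casc _ c a) (at level 40, left associativity).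
Notation "'nrm' a" := (canorm _ a) (at level 10).

Lemma add0l {A : CStarAlg} (a : A) : ca0 A +A a = a.
Proof. rewrite ca_addC, ca_add0; auto. Qed.

Lemma addNl {A : CStarAlg} (a : A) : -A a +A a = ca0 A.
Proof. rewrite ca_addC, ca_addN; auto. Qed.

Lemma add_cancel {A : CStarAlg} (a b c : A) : a +A b = a +A c -> b = c.
Proof.
  intros H. rewrite <- (add0l b), <- (add0l c), <- (addNl a), <- !ca_addA, H; auto.
Qed.

Lemma opp_unique {A : CStarAlg} (a b : A) : a +A b = ca0 A -> b = -A a.
Proof. intros H. apply (add_cancel a). rewrite H, ca_addN; auto. Qed.

Lemma opp_opp {A : CStarAlg} (a : A) : -A -A a = a.
Proof. symmetry. apply opp_unique. apply addNl. Qed.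

Lemma opp_add {A : CStarAlg} (a b : A) : -A (a +A b) = -A a +A -A b.
Proof.
  symmetry; apply opp_unique.
  rewrite (ca_addC _ (-A a)), ca_addA, <- (ca_addA _ a), ca_addN, ca_add0, ca_addN. auto.
Qed.

Lemma add_sub {A : CStarAlg} (a b c : A) : (a -A b) +A (b -A c) = a -A c.
Proof. rewrite <- ca_addA, (ca_addA _ (-A b)), addNl, add0l. auto. Qed.

Lemma sub_add_sub {A : CStarAlg} (a b c d : A) : (a +A b) -A (c +A d) = (a -A c) +A (b -A d).
Proof.
  rewrite opp_add. rewrite <- !ca_addA. f_equal. rewrite !ca_addA. f_equal. apply ca_addC.
Qed.

Lemma mul0r {A : CStarAlg} (a : A) : a *A ca0 A = ca0 A.
Proof.
  apply (add_cancel (a *A ca0 A)). rewrite <- ca_mulDr, !ca_add0. auto.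
Qed.
Lemma mul0l {A : CStarAlg} (a : A) : ca0 A *A a = ca0 A.
Proof.
  apply (add_cancel (ca0 A *A a)). rewrite <- ca_mulDl, !ca_add0. auto.
Qed.
Lemma mul_oppr {A : CStarAlg} (a b : A) : a *A (-A b) = -A (a *A b).
Proof. apply opp_unique. rewrite <- ca_mulDr, ca_addN, mul0r. auto. Qed.
Lemma mul_oppl {A : CStarAlg} (a b : A) : (-A a) *A b = -A (a *A b).
Proof. apply opp_unique. rewrite <- ca_mulDl, ca_addN, mul0l. auto. Qed.
Lemma mul_subr {A : CStarAlg} (a b c : A) : a *A (b -A c) = a *A b -A a *A c.
Proof. rewrite ca_mulDr, mul_oppr. auto. Qed.
Lemma mul_subl {A : CStarAlg} (a b c : A) : (b -A c) *A a = b *A a -A c *A a.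
Proof. rewrite ca_mulDl, mul_oppl. auto. Qed.

Lemma sc0 {A : CStarAlg} (a : A) : C0 .A a = ca0 A.
Proof.
  apply (add_cancel (C0 .A a)). rewrite <- ca_scDl, ca_add0.
  replace (Cadd C0 C0) with C0 by Cring. auto.
Qed.
Lemma sc_opp {A : CStarAlg} (s : C) (a : A) : (Copp s) .A a = -A (s .A a).
Proof. apply opp_unique. rewrite <- ca_scDl. replace (Cadd s (Copp s)) with C0 by Cring. apply sc0. Qed.
Lemma sc_zero {A : CStarAlg} (s : C) : s .A ca0 A = ca0 A.
Proof. apply (add_cancel (s .A ca0 A)). rewrite <- ca_scDr, !ca_add0. auto. Qed.
Lemma sc_oppv {A : CStarAlg} (s : C) (a : A) : s .A (-A a) = -A (s .A a).
Proof. apply opp_unique. rewrite <- ca_scDr, ca_addN, sc_zero. auto. Qed.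
Lemma sc_sub {A : CStarAlg} (s : C) (a b : A) : s .A (a -A b) = s .A a -A s .A b.
Proof. rewrite ca_scDr, sc_oppv. auto. Qed.
Lemma opp_sc {A : CStarAlg} (a : A) : -A a = (Copp C1) .A a.
Proof. rewrite sc_opp, ca_sc1. auto. Qed.

Lemma norm0 {A : CStarAlg} : nrm (ca0 A) = 0.
Proof. rewrite <- (sc0 (ca0 A)), ca_norm_sc, Cnorm_C0. ring. Qed.
Lemma norm_opp {A : CStarAlg} (a : A) : nrm (-A a) = nrm a.
Proof. rewrite opp_sc, ca_norm_sc, Cnorm_opp, Cnorm_C1. ring. Qed.
Lemma opp_sub {A : CStarAlg} (a b : A) : -A (a -A b) = b -A a.
Proof. rewrite opp_add, opp_opp, ca_addC. auto. Qed.
Lemma norm_sub_sym {A : CStarAlg} (a b : A) : nrm (a -A b) = nrm (b -A a).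
Proof. rewrite <- norm_opp, opp_sub. auto. Qed.
Lemma norm_sub_tri {A : CStarAlg} (a b c : A) : nrm (a -A c) <= nrm (a -A b) + nrm (b -A c).
Proof. rewrite <- (add_sub a b c). apply ca_norm_triangle. Qed.
Lemma sub_self {A : CStarAlg} (a : A) : a -A a = ca0 A.
Proof. apply ca_addN. Qed.
Lemma add_sub_r {A : CStarAlg} (a b : A) : (a -A b) +A b = a.
Proof. rewrite <- ca_addA, addNl, ca_add0. auto. Qed.
Lemma norm_rev {A : CStarAlg} (a b : A) : Rabs (nrm a - nrm b) <= nrm (a -A b).
Proof.
  pose proof (ca_norm_triangle _ (a -A b) b). rewrite add_sub_r in H.
  pose proof (ca_norm_triangle _ (b -A a) a). rewrite add_sub_r in H0. rewrite norm_sub_sym in H0.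
  apply Rabs_le. lra.
Qed.
Lemma norm_le_add {A : CStarAlg} (a b : A) : nrm a <= nrm b + nrm (a -A b).
Proof. pose proof (norm_rev a b). pose proof (Rle_abs (nrm a - nrm b)). lra. Qed.

Lemma star1 {A : CStarAlg} : castar A (ca1 A) = ca1 A.
Proof.
  assert (H : castar A (castar A (ca1 A) *A ca1 A) = castar A (ca1 A)).
  { rewrite ca_starM, ca_starK, ca_mul1r. auto. }
  rewrite ca_mul1r, ca_starK in H. auto.
Qed.
Lemma star_opp {A : CStarAlg} (a : A) : castar A (-A a) = -A (castar A a).
Proof. rewrite !opp_sc, ca_starsc. f_equal. Cring. Qed.
Lemma star_sub {A : CStarAlg} (a b : A) : castar A (a -A b) = castar A a -A castar A b.
Proof. rewrite ca_starD, star_opp. auto. Qed.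

Lemma norm_star_le {A : CStarAlg} (a : A) : nrm a <= nrm (castar A a).
Proof.
  pose proof (ca_norm_cstar _ a). pose proof (ca_norm_mul _ (castar A a) a).
  pose proof (ca_norm_ge0 _ a). pose proof (ca_norm_ge0 _ (castar A a)).
  destruct (Req_dec (nrm a) 0). lra. simpl in H. nra.
Qed.
Lemma norm_star {A : CStarAlg} (a : A) : nrm (castar A a) = nrm a.
Proof. apply Rle_antisym. rewrite <- (ca_starK _ a) at 2. apply norm_star_le. apply norm_star_le. Qed.

Lemma norm1_le {A : CStarAlg} : nrm (ca1 A) <= 1.
Proof.
  pose proof (ca_norm_cstar _ (ca1 A)). rewrite star1, ca_mul1r in H. pose proof (ca_norm_ge0 _ (ca1 A)).
  simpl in H. nra.
Qed.
Lemma norm_sc1 {A : CStarAlg} (c : C) : nrm (c .A ca1 A) <= Cnorm c.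
Proof. rewrite ca_norm_sc. pose proof norm1_le (A:=A). pose proof (Cnorm_ge0 c).
  pose proof (ca_norm_ge0 _ (ca1 A)). nra. Qed.

(* Perturbation of a product: a'b' - ab = a'(b' - b) + (a' - a)b. *)
Lemma prod_est {A : CStarAlg} (a b a' b' : A) :
  nrm (a' *A b' -A a *A b) <= (nrm a + nrm (a' -A a)) * nrm (b' -A b) + nrm (a' -A a) * nrm b.
Proof.
  eapply Rle_trans. apply (norm_sub_tri _ (a' *A b)).
  rewrite <- mul_subr, <- mul_subl.
  pose proof (ca_norm_mul _ a' (b' -A b)). pose proof (ca_norm_mul _ (a' -A a) b).
  pose proof (norm_le_add a' a). pose proof (ca_norm_ge0 _ (b' -A b)).
  pose proof (Rmult_le_compat_r _ _ _ H2 H1). lra.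
Qed.

(* Tolerances for the perturbation of a product given by prod_est. *)
Lemma real_prod_tol : forall X Y eps, 0 <= X -> 0 <= Y -> 0 < eps ->
  exists e1 e2, 0 < e1 /\ 0 < e2 /\ forall d1 d2, 0 <= d1 < e1 -> 0 <= d2 < e2 -> (X + d1) * d2 + d1 * Y < eps.
Proof.
  intros. exists (Rmin 1 (eps / (2 * (Y + 1)))), (eps / (2 * (X + 2))). repeat split.
  - apply Rmin_glb_lt. lra. apply Rdiv_lt_0_compat; lra.
  - apply Rdiv_lt_0_compat; lra.
  - intros d1 d2 [H2 H3] [H4 H5].
    assert (d1 < 1) by (eapply Rlt_le_trans; [exact H3|apply Rmin_l]).
    assert (d1 < eps / (2 * (Y+1))) by (eapply Rlt_le_trans; [exact H3|apply Rmin_r]).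
    assert (d1 * (Y + 1) < eps / 2).
    { apply Rmult_lt_compat_r with (r := Y + 1) in H7; [|lra]. replace (eps / 2) with (eps / (2 * (Y + 1)) * (Y + 1)) by (field; lra). lra. }
    assert ((X + d1) * d2 < eps / 2).
    { apply Rle_lt_trans with ((X + 2) * d2). apply Rmult_le_compat_r; lra.
      apply Rmult_lt_compat_l with (r := X + 2) in H5; [|lra]. replace (eps / 2) with ((X + 2) * (eps / (2 * (X + 2)))) by (field; lra). lra. }
    nra.
Qed.

(** * Evaluation of polynomials in the C*-algebra *)

Lemma aeval_ext : forall (A : CStarAlg) N (x y : nat -> A) P, vars_lt N P -> (forall i, (i<N)%nat -> x i = y i) -> aeval A x P = aeval A y P.
Proof. induction P; simpl; intros; auto; destruct H; rewrite IHP1, IHP2 by auto; auto. Qed.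

Lemma aeval_psubst : forall A x P Q, aeval A x (psubst P Q) = aeval A (fun i => aeval A x (Q i)) P.
Proof. induction P; intros; simpl; try rewrite IHP1, IHP2; auto. Qed.

Lemma aeval_padj : forall A N x P, (forall i, (i<N)%nat -> selfadjoint (x i)) -> vars_lt N P ->
  castar A (aeval A x P) = aeval A x (padj Cconj P).
Proof.
  induction P; simpl; intros.
  - apply H; auto.
  - rewrite ca_starsc, star1; auto.
  - destruct H0; rewrite ca_starD, IHP1, IHP2; auto.
  - destruct H0; rewrite ca_starM, IHP1, IHP2; auto.
Qed.

Lemma aeval_cont : forall (A : CStarAlg) N P (u : nat -> A) eps, vars_lt N P -> 0 < eps ->
  exists del, 0 < del /\ forall v, (forall i, (i<N)%nat -> nrm (v i -A u i) < del) ->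
    nrm (aeval A v P -A aeval A u P) < eps.
Proof.
  induction P; simpl; intros u eps HV He.
  - exists eps; split; auto.
  - exists 1; split; [lra|]. intros. rewrite sub_self, norm0; auto.
  - destruct HV. destruct (IHP1 u (eps/2) H ltac:(lra)) as [d1 [Hd1 H1]].
    destruct (IHP2 u (eps/2) H0 ltac:(lra)) as [d2 [Hd2 H2]].
    exists (Rmin d1 d2); split. apply Rmin_glb_lt; auto. intros v Hv.
    rewrite sub_add_sub. eapply Rle_lt_trans. apply ca_norm_triangle.
    assert (nrm (aeval A v P1 -A aeval A u P1) < eps/2). { apply H1; intros. eapply Rlt_le_trans; [apply Hv; auto|apply Rmin_l]. }
    assert (nrm (aeval A v P2 -A aeval A u P2) < eps/2). { apply H2; intros. eapply Rlt_le_trans; [apply Hv; auto|apply Rmin_r]. }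
    lra.
  - destruct HV.
    destruct (real_prod_tol (nrm (aeval A u P1)) (nrm (aeval A u P2)) eps (ca_norm_ge0 _ _) (ca_norm_ge0 _ _) He) as [e1 [e2 [He1 [He2 Hp]]]].
    destruct (IHP1 u e1 H He1) as [d1 [Hd1 H1]].
    destruct (IHP2 u e2 H0 He2) as [d2 [Hd2 H2]].
    exists (Rmin d1 d2); split. apply Rmin_glb_lt; auto. intros v Hv.
    eapply Rle_lt_trans. apply prod_est. apply Hp; split; try apply ca_norm_ge0.
    apply H1; intros. eapply Rlt_le_trans; [apply Hv; auto|apply Rmin_l].
    apply H2; intros. eapply Rlt_le_trans; [apply Hv; auto|apply Rmin_r].
Qed.

Lemma Q2R_frac : forall (a : Z) (p : positive), Q2R (Qmake a p) = IZR a / IZR (Zpos p).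
Proof. intros; unfold Q2R; simpl; auto. Qed.

Lemma rat_approx : forall r eps, 0 < eps -> exists q : Q, Rabs (Q2R q - r) < eps.
Proof.
  intros r eps He. set (N := up (/ eps)).
  assert (HN : 0 < IZR N). { destruct (archimed (/ eps)). pose proof (Rinv_0_lt_compat _ He). unfold N. lra. }
  assert (HNp : (0 < N)%Z) by (apply lt_IZR; auto).
  exists (Qmake (up (r * IZR N)) (Z.to_pos N)). rewrite Q2R_frac. rewrite Z2Pos.id by auto.
  destruct (archimed (r * IZR N)). destruct (archimed (/ eps)). fold N in H1, H2.
  assert (/ IZR N < eps).
  { apply Rmult_lt_reg_l with (IZR N); auto. rewrite Rinv_r by lra.
    apply Rmult_lt_reg_l with (/ eps). apply Rinv_0_lt_compat; auto.
    rewrite Rmult_1_r, (Rmult_comm (IZR N)), <- Rmult_assoc, Rinv_l, Rmult_1_l by lra. lra. }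
  rewrite Rabs_right.
  - apply Rle_lt_trans with (/ IZR N); auto.
    replace (IZR (up (r * IZR N)) / IZR N - r) with ((IZR (up (r * IZR N)) - r * IZR N) / IZR N) by (field; lra).
    unfold Rdiv. rewrite <- (Rmult_1_l (/ IZR N)) at 2. apply Rmult_le_compat_r. left; apply Rinv_0_lt_compat; auto. lra.
  - replace (IZR (up (r * IZR N)) / IZR N - r) with ((IZR (up (r * IZR N)) - r * IZR N) / IZR N) by (field; lra).
    apply Rle_ge. unfold Rdiv. apply Rmult_le_pos. lra. left; apply Rinv_0_lt_compat; auto.
Qed.

Lemma crat_approx : forall c eps, 0 < eps -> exists q : QC, Cnorm (Cadd (QC2C q) (Copp c)) < eps.
Proof.
  intros. destruct (rat_approx (Re c) (eps/2) ltac:(lra)) as [a Ha].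
  destruct (rat_approx (Im c) (eps/2) ltac:(lra)) as [b Hb].
  exists (a, b). eapply Rle_lt_trans. apply Cnorm_le_ReIm. unfold QC2C; simpl. unfold Rminus in *. lra.
Qed.

Lemma sc_sub_scal {A : CStarAlg} (c d : C) (a : A) : c .A a -A d .A a = (Cadd c (Copp d)) .A a.
Proof. rewrite ca_scDl, sc_opp. auto. Qed.

Lemma rational_approx_poly : forall (A : CStarAlg) (u : nat -> A) P eps, 0 < eps ->
  exists Pq : ncpoly QC, (forall N, vars_lt N P -> vars_lt N Pq) /\
    nrm (aeval A u (ncmap QC2C Pq) -A aeval A u P) < eps.
Proof.
  induction P; intros eps He; simpl.
  - exists (NCvar i). split; auto. simpl. rewrite sub_self, norm0; auto.
  - destruct (crat_approx c eps He) as [q Hq]. exists (NCconst q). split; auto. simpl.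
    rewrite sc_sub_scal. eapply Rle_lt_trans; [apply norm_sc1|]. auto.
  - destruct (IHP1 (eps/2) ltac:(lra)) as [Q1 [V1 H1]]. destruct (IHP2 (eps/2) ltac:(lra)) as [Q2 [V2 H2]].
    exists (NCadd Q1 Q2). split. simpl; intuition. simpl.
    rewrite sub_add_sub. eapply Rle_lt_trans. apply ca_norm_triangle. lra.
  - destruct (real_prod_tol (nrm (aeval A u P1)) (nrm (aeval A u P2)) eps (ca_norm_ge0 _ _) (ca_norm_ge0 _ _) He) as [e1 [e2 [He1 [He2 Hp]]]].
    destruct (IHP1 e1 He1) as [Q1 [V1 H1]]. destruct (IHP2 e2 He2) as [Q2 [V2 H2]].
    exists (NCmul Q1 Q2). split. simpl; intuition. simpl.
    eapply Rle_lt_trans. apply prod_est. apply Hp; split; try apply ca_norm_ge0; auto.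
Qed.

Definition half : QC := (Qmake 1 2, 0%Q).
Definition hC : C := mkC (/ 2) 0.
Lemma QC2C_half : QC2C half = hC.
Proof. unfold QC2C, half, hC; simpl. rewrite Q2R_frac. unfold Q2R; simpl. apply C_ext; simpl; field. Qed.

Definition symQ (Q : ncpoly QC) : ncpoly QC := NCmul (NCconst half) (NCadd Q (padj qconj Q)).

Lemma vars_lt_symQ : forall N Q, vars_lt N Q -> vars_lt N (symQ Q).
Proof. intros; simpl; repeat split; auto. apply vars_lt_padj; auto. Qed.

Lemma aeval_symQ : forall (A : CStarAlg) N (x : nat -> A) Q, (forall i, (i<N)%nat -> selfadjoint (x i)) -> vars_lt N Q ->
  aeval A x (ncmap QC2C (symQ Q)) = hC .A (aeval A x (ncmap QC2C Q) +A castar A (aeval A x (ncmap QC2C Q))).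
Proof.
  intros. simpl. rewrite QC2C_half, ncmap_padj. rewrite <- (aeval_padj A N) by (auto using vars_lt_ncmap).
  rewrite ca_mulscl, ca_mul1l. auto.
Qed.

Lemma sym_est : forall (A : CStarAlg) (a y : A), selfadjoint y ->
  nrm (hC .A (a +A castar A a) -A y) <= nrm (a -A y).
Proof.
  intros A a y Hy.
  assert (Ey : y = hC .A (y +A castar A y)).
  { unfold selfadjoint in Hy. rewrite Hy. rewrite <- (ca_sc1 _ y) at 2 3. rewrite <- ca_scDl, ca_scA.
    replace (Cmul hC (Cadd C1 C1)) with C1 by (apply C_ext; simpl; field). rewrite ca_sc1; auto. }
  rewrite Ey at 1. rewrite <- sc_sub, sub_add_sub, <- star_sub, ca_norm_sc.
  pose proof (ca_norm_triangle _ (a -A y) (castar A (a -A y))). rewrite norm_star in H.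
  assert (Cnorm hC = / 2). { change hC with (RtoC (/2)). rewrite Cnorm_RtoC, Rabs_right. auto. lra. }
  rewrite H0. lra.
Qed.

(** * Suprema and infima in the extended reals *)

Lemma ERle_trans : forall a b c, ERle a b -> ERle b c -> ERle a c.
Proof. destruct a, b, c; simpl; auto; try lra; tauto. Qed.
Lemma ERle_antisym : forall a b, ERle a b -> ERle b a -> a = b.
Proof. destruct a, b; simpl; intros; try tauto. f_equal; lra. Qed.
Lemma ERle_pinf : forall a, ERle a ERpinf.
Proof. destruct a; simpl; auto. Qed.
Lemma ERle_ninf : forall a, ERle ERninf a.
Proof. destruct a; simpl; auto. Qed.

Lemma ER_sup_exists : forall S, exists l, ER_is_sup S l.
Proof.
  intros S.
  destruct (classic (S ERpinf)) as [Hp|Hp].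
  { exists ERpinf. split. intros; apply ERle_pinf. intros u Hu. apply Hu in Hp. auto. }
  set (T := fun r => S (ERfin r)).
  destruct (classic (exists r, T r)) as [Hne|Hne].
  - destruct (classic (bound T)) as [Hb|Hb].
    + destruct (completeness T Hb Hne) as [m [Hm1 Hm2]].
      exists (ERfin m). split.
      * intros [r| |] Hx; simpl. apply Hm1; exact Hx. exact (Hp Hx). exact I.
      * intros [b| |] Hu; simpl; auto.
        -- apply Hm2. intros r Hr. specialize (Hu (ERfin r) Hr). simpl in Hu; auto.
        -- destruct Hne as [r Hr]. specialize (Hu (ERfin r) Hr). simpl in Hu; auto.
    + exists ERpinf. split. intros; apply ERle_pinf.
      intros [b| |] Hu; simpl; auto.
      * apply Hb. exists b. intros r Hr. specialize (Hu (ERfin r) Hr). simpl in Hu; auto.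
      * destruct Hne as [r Hr]. specialize (Hu (ERfin r) Hr). simpl in Hu; auto.
  - exists ERninf. split.
    + intros [r| |] Hx; simpl. apply Hne; exists r; exact Hx. exact (Hp Hx). exact I.
    + intros; apply ERle_ninf.
Qed.

Lemma ER_sup_spec : forall S, ER_is_sup S (ER_sup S).
Proof. intros; unfold ER_sup; apply epsilon_spec, ER_sup_exists. Qed.

Lemma ER_inf_exists : forall S, exists l, ER_is_inf S l.
Proof.
  intros S. destruct (ER_sup_exists (fun u => forall x, S x -> ERle u x)) as [l [H1 H2]].
  exists l. split.
  - intros x Hx. apply H2. intros u Hu. apply Hu; auto.
  - intros u Hu. apply H1; auto.
Qed.

Lemma ER_inf_spec : forall S, ER_is_inf S (ER_inf S).
Proof. intros; unfold ER_inf; apply epsilon_spec, ER_inf_exists. Qed.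

Lemma sup_ub : forall S x, S x -> ERle x (ER_sup S).
Proof. intros. apply (proj1 (ER_sup_spec S)); auto. Qed.
Lemma sup_le : forall S u, (forall x, S x -> ERle x u) -> ERle (ER_sup S) u.
Proof. intros. apply (proj2 (ER_sup_spec S)); auto. Qed.
Lemma inf_lb : forall S x, S x -> ERle (ER_inf S) x.
Proof. intros. apply (proj1 (ER_inf_spec S)); auto. Qed.
Lemma le_inf : forall S u, (forall x, S x -> ERle u x) -> ERle u (ER_inf S).
Proof. intros. apply (proj2 (ER_inf_spec S)); auto. Qed.

(* limsup_k is monotone (the value at k = 0 is irrelevant). *)
Lemma limsup_seq_mono : forall a b : nat -> ER, (forall k, (1 <= k)%nat -> ERle (a k) (b k)) ->
  ERle (ER_limsup_seq a) (ER_limsup_seq b).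
Proof.
  intros. unfold ER_limsup_seq. apply le_inf. intros v [N ->].
  eapply ERle_trans. apply inf_lb. exists (Nat.max N 1). reflexivity.
  apply sup_le. intros w [k [Hk ->]]. eapply ERle_trans. apply H; lia.
  apply sup_ub. exists k; split; auto; lia.
Qed.

Lemma log_div_mono : forall N M k, (N <= M)%nat -> ERle (log_div N k) (log_div M k).
Proof.
  intros. unfold log_div. destruct N. apply ERle_ninf. destruct M. lia. cbn [ERle].
  unfold Rdiv. apply Rmult_le_compat_r. destruct (k*k)%nat. simpl; rewrite Rinv_0; lra.
  apply Rlt_le, Rinv_0_lt_compat, lt_0_INR; lia.
  destruct (Rle_lt_or_eq _ _ (le_INR (S N) (S M) H)) as [Hl|He]. left; apply ln_increasing; auto. apply lt_0_INR; lia.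
  rewrite He; right; auto.
Qed.

(** * Orbit covering numbers *)

Lemma nat_min_exists : forall P : nat -> Prop, (exists n, P n) -> exists n, P n /\ forall m, P m -> (n <= m)%nat.
Proof.
  intros P [n Hn]. revert Hn. pattern n. apply (well_founded_induction lt_wf). clear n.
  intros n IH Hn. destruct (classic (exists m, P m /\ (m < n)%nat)) as [[m [Hm Hlt]]|H].
  - apply (IH m Hlt Hm).
  - exists n; split; auto. intros m Hm. destruct (Nat.lt_ge_cases m n); auto. exfalso; apply H; eauto.
Qed.

Lemma o2_spec : forall k n Sigma om, (exists N, orbit_covers k n Sigma om N) ->
  orbit_covers k n Sigma om (o2 k n Sigma om) /\ forall M, orbit_covers k n Sigma om M -> (o2 k n Sigma om <= M)%nat.
Proof. intros. unfold o2. apply epsilon_spec. apply nat_min_exists; auto. Qed.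

Lemma o2_le : forall k n Sigma om M, orbit_covers k n Sigma om M -> (o2 k n Sigma om <= M)%nat.
Proof. intros. apply (proj2 (o2_spec k n Sigma om ltac:(eauto))); auto. Qed.

(* A set on which finitely many bounded integer-valued codes are defined is covered,
   up to equality of all codes, by a finite list of its own elements (pigeonhole). *)
Lemma finite_code_cover : forall (X T : Type) (code : T -> X -> nat) (M : nat) (ts : list T) (Sig : X -> Prop),
  (forall t x, In t ts -> Sig x -> (code t x < M)%nat) ->
  exists L : list X, (forall c, In c L -> Sig c) /\
    forall x, Sig x -> exists c, In c L /\ forall t, In t ts -> code t x = code t c.
Proof.
  intros X T code M ts. induction ts as [|t ts IH]; intros Sig HB.
  - destruct (classic (exists x, Sig x)) as [[x0 Hx0]|Hn].
    + exists (x0 :: nil). split. intros c [<-|[]]; auto. intros x Hx. exists x0; split; simpl; auto. intros _ [].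
    + exists nil. split. intros _ []. intros x Hx; exfalso; eauto.
  - assert (Hv : forall vs : list nat, exists L : list X, (forall c, In c L -> Sig c) /\
       forall x, Sig x -> In (code t x) vs -> exists c, In c L /\ forall t', In t' (t :: ts) -> code t' x = code t' c).
    { induction vs as [|v vs IHv].
      - exists nil. split. intros _ []. intros x _ [].
      - destruct IHv as [L1 [H1 H1']].
        destruct (IH (fun x => Sig x /\ code t x = v)) as [L2 [H2 H2']].
        { intros t' x Ht' [Hx _]. apply HB; simpl; auto. }
        exists (L2 ++ L1). split.
        + intros c Hc. apply in_app_or in Hc. destruct Hc. apply H2; auto. apply H1; auto.
        + intros x Hx [Hxv|Hxv].
          * destruct (H2' x (conj Hx (eq_sym Hxv))) as [c [Hc Hcc]]. exists c. split. apply in_or_app; auto.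
            intros t' [<-|Ht']. destruct (H2 c Hc). congruence. auto.
          * destruct (H1' x Hx Hxv) as [c [Hc Hcc]]. exists c. split. apply in_or_app; auto. auto. }
    destruct (Hv (seq 0 M)) as [L [H1 H2]]. exists L. split; auto.
    intros x Hx. apply H2; auto. apply in_seq. split. lia. simpl. apply HB; simpl; auto.
Qed.

(* rcode d K r is the index of the cell of length d containing r, shifted by K so
   that it is a natural number when |r| <= K d. *)
Definition rcode (d : R) (K : Z) (r : R) : nat := Z.to_nat (up (r / d) + K).

Lemma rcode_bound : forall d K r Rr, 0 < d -> Rabs r <= Rr -> Rr / d < IZR K ->
  (rcode d K r < Z.to_nat (2 * K) + 1)%nat /\ (0 < up (r / d) + K)%Z.
Proof.
  intros. unfold rcode. destruct (archimed (r / d)).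
  assert (Hr1 : r / d <= Rr / d).
  { unfold Rdiv; apply Rmult_le_compat_r; [left; apply Rinv_0_lt_compat; auto|].
    apply Rle_trans with (Rabs r); [apply Rle_abs|auto]. }
  assert (Hr2 : - (Rr / d) <= r / d).
  { unfold Rdiv. rewrite Ropp_mult_distr_l. apply Rmult_le_compat_r. left; apply Rinv_0_lt_compat; auto.
    pose proof (Rle_abs (-r)). rewrite Rabs_Ropp in H4. lra. }
  assert (Hu : (up (r / d) <= K)%Z). { apply Z.lt_succ_r. apply lt_IZR. rewrite succ_IZR. lra. }
  assert (Hl : (0 < up (r / d) + K)%Z). { apply lt_IZR. rewrite plus_IZR. lra. }
  split; [|auto]. lia.
Qed.

Lemma rcode_close : forall d K r s, 0 < d -> (0 < up (r / d) + K)%Z -> (0 < up (s / d) + K)%Z ->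
  rcode d K r = rcode d K s -> Rabs (r - s) < d.
Proof.
  intros. unfold rcode in H2. apply Z2Nat.inj in H2; try lia.
  assert (E : up (r / d) = up (s / d)) by lia.
  destruct (archimed (r / d)), (archimed (s / d)). rewrite E in H3, H4.
  assert (Rabs (r / d - s / d) < 1) by (apply Rabs_def1; lra).
  replace (r - s) with (d * (r / d - s / d)) by (field; lra).
  rewrite Rabs_mult, Rabs_right by lra. nra.
Qed.

Lemma complex_codes_close : forall d K Rr z w, 0 < d -> Rr / d < IZR K ->
  Cnorm z <= Rr -> Cnorm w <= Rr ->
  rcode d K (Re z) = rcode d K (Re w) -> rcode d K (Im z) = rcode d K (Im w) ->
  Cnorm (Cadd z (Copp w)) <= 2 * d.
Proof.
  intros d K Rr z w Hd HK Hz Hw ERe EIm.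
  pose proof (Re_le_Cnorm z); pose proof (Re_le_Cnorm w); pose proof (Im_le_Cnorm z); pose proof (Im_le_Cnorm w).
  assert (CRe : Rabs (Re z - Re w) < d).
  { apply rcode_close with K; auto; eapply (rcode_bound d K _ Rr); auto; lra. }
  assert (CIm : Rabs (Im z - Im w) < d).
  { apply rcode_close with K; auto; eapply (rcode_bound d K _ Rr); auto; lra. }
  eapply Rle_trans; [apply Cnorm_le_ReIm|]. simpl. unfold Rminus in CRe, CIm. lra.
Qed.

(* The coordinates (i, a, b, Re/Im) of an n-tuple of k x k matrices. *)
Definition coord := (nat * nat * nat * bool)%type.

Definition coords (n k : nat) : list coord :=
  flat_map (fun i => flat_map (fun a => flat_map (fun b => (i,a,b,true) :: (i,a,b,false) :: nil) (seq 0 k)) (seq 0 k)) (seq 0 n).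

Lemma in_coords : forall n k i a b t, (i<n)%nat -> (a<k)%nat -> (b<k)%nat -> In (i,a,b,t) (coords n k).
Proof.
  intros. unfold coords. apply in_flat_map. exists i; split. apply in_seq; lia.
  apply in_flat_map. exists a; split. apply in_seq; lia. apply in_flat_map. exists b; split. apply in_seq; lia.
  destruct t; simpl; auto.
Qed.

Lemma in_coords_inv : forall n k i a b t, In (i,a,b,t) (coords n k) -> (i<n)%nat /\ (a<k)%nat /\ (b<k)%nat.
Proof.
  intros. unfold coords in H. apply in_flat_map in H. destruct H as [i' [Hi H]].
  apply in_flat_map in H. destruct H as [a' [Ha H]]. apply in_flat_map in H. destruct H as [b' [Hb H]].
  apply in_seq in Hi, Ha, Hb. simpl in H. destruct H as [H|[H|[]]]; inversion H; subst; lia.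
Qed.

Definition ccode (d : R) (K : Z) (t : coord) (As : nat -> Mat) : nat :=
  match t with (i, a, b, true) => rcode d K (Re (As i a b)) | (i, a, b, false) => rcode d K (Im (As i a b)) end.

Lemma tdist_entry_bound : forall k n As Bs e, (1 <= k)%nat -> 0 <= e ->
  (forall i a b, (i<n)%nat -> (a<k)%nat -> (b<k)%nat -> Cnorm (mat_sub (As i) (Bs i) a b) <= e) ->
  tdist k n As Bs <= sqrt (INR (n * k)) * e.
Proof.
  intros k n As Bs e Hk He Hent.
  assert (Hkpos : 0 < INR k) by (apply lt_0_INR; lia).
  assert (Hm : forall i, (i<n)%nat -> mnorm2 k (mat_sub (As i) (Bs i)) ^ 2 <= INR k * e ^ 2).
  { intros i Hi. rewrite mnorm2_sq.
    apply Rle_trans with (/ INR k * Rsum k (fun _ => Rsum k (fun _ => e ^ 2))).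
    - apply Rmult_le_compat_l; [apply inv_INR_ge0|].
      apply Rsum_le; intros; apply Rsum_le; intros. apply pow_incr; split; [apply Cnorm_ge0|auto].
    - rewrite !Rsum_const. right; field; lra. }
  unfold tdist. rewrite <- (sqrt_pow2 e) by auto.
  rewrite <- sqrt_mult by (apply pos_INR || apply pow2_ge_0). apply sqrt_le_1_alt.
  apply Rle_trans with (Rsum n (fun _ => INR k * e ^ 2)); [apply Rsum_le; auto|].
  rewrite Rsum_const, mult_INR. right; ring.
Qed.

Lemma mul_div_succ_lt : forall L a, 0 <= L -> 0 < a -> L * (a / (L + 1)) < a.
Proof.
  intros. replace (L * (a / (L + 1))) with (a * (L / (L + 1))) by (field; lra).
  assert (L / (L + 1) < 1).
  { apply Rmult_lt_reg_r with (L + 1); [lra|]. unfold Rdiv; rewrite Rmult_assoc, Rinv_l, Rmult_1_r; lra. }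
  nra.
Qed.

(* A set of operator-norm bounded n-tuples of k x k matrices has a finite cover by
   om-orbit balls; in fact by balls (W = 1) around points agreeing in all cells of a
   fine enough grid. *)
Lemma cover_exists : forall k n (Sig : (nat -> Mat) -> Prop) om Rr, (1 <= k)%nat -> 0 < om ->
  (forall As, Sig As -> tuple_wf k n As /\ forall i, (i<n)%nat -> opnorm k (As i) <= Rr) ->
  exists N, orbit_covers k n Sig om N.
Proof.
  intros k n Sig om Rr Hk Hom HS.
  set (s := sqrt (INR (n * k))). assert (Hs : 0 <= s) by apply sqrt_pos.
  set (d := om / (2 * (s + 1))). assert (Hd : 0 < d) by (unfold d; apply Rdiv_lt_0_compat; lra).
  set (K := up (Rr / d)). assert (HK : Rr / d < IZR K) by (unfold K; destruct (archimed (Rr / d)); lra).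
  assert (Hentry : forall As i a b, Sig As -> (i<n)%nat -> (a<k)%nat -> (b<k)%nat -> Cnorm (As i a b) <= Rr).
  { intros As i a b HAs Hi Ha Hb. apply Rle_trans with (opnorm k (As i)); [apply entry_le_opnorm; auto | apply (proj2 (HS As HAs)); auto]. }
  destruct (finite_code_cover (nat -> Mat) coord (ccode d K) (Z.to_nat (2*K) + 1) (coords n k) Sig) as [L [HL1 HL2]].
  { intros [[[i a] b] t] As Ht HAs. apply in_coords_inv in Ht. destruct Ht as [Hi [Ha Hb]].
    pose proof (Hentry As i a b HAs Hi Ha Hb).
    destruct t; simpl; apply (rcode_bound d K _ Rr); auto.
    - pose proof (Re_le_Cnorm (As i a b)); lra.
    - pose proof (Im_le_Cnorm (As i a b)); lra. }
  exists (length L), L. split; auto. split; auto.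
  intros As HAs. destruct (HL2 As HAs) as [c [Hc Hcc]]. exists c; split; auto.
  exists (mat_id k). split; [apply unitary_id|].
  rewrite orbit_dist_tdist, (tdist_ext k n As _ As c).
  2:{ intros. split; auto. rewrite conjW_id; auto. apply (tuple_wf_allwf k n c), (HS c (HL1 c Hc)). }
  eapply Rle_lt_trans.
  - apply (tdist_entry_bound k n As c (2 * d)); auto; [lra|].
    intros i a b Hi Ha Hb. apply (complex_codes_close d K Rr); [exact Hd | exact HK | | | |].
    + apply Hentry; auto.
    + apply (Hentry c); auto.
    + apply (Hcc (i,a,b,true)), in_coords; auto.
    + apply (Hcc (i,a,b,false)), in_coords; auto.
  - fold s. replace (s * (2 * d)) with (s * (om / (s + 1))) by (unfold d; field; lra).
    apply mul_div_succ_lt; auto.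
Qed.

(** * Tuples of matrices and microstates *)

Lemma mat_selfadj_sa : forall k M, mat_selfadj k M -> mat_adj M = M.
Proof. intros k M [_ H]. apply mat_eq; intros. rewrite <- H; auto. Qed.

Lemma tuple_sa_of : forall k n As, tuple_wf k n As -> (forall i, (i<n)%nat -> mat_selfadj k (As i)) -> tuple_sa As.
Proof.
  intros k n As [_ Hz] Hs i. destruct (Nat.lt_ge_cases i n).
  - apply (mat_selfadj_sa k); auto.
  - apply mat_eq; intros. unfold mat_adj. rewrite !Hz by auto. Cring.
Qed.

Lemma tuple_opnorm_all : forall k n As Rr, 0 <= Rr -> tuple_wf k n As -> (forall i, (i<n)%nat -> opnorm k (As i) <= Rr) ->
  forall i, opnorm k (As i) <= Rr.
Proof.
  intros k n As Rr HR [_ Hz] Ho i. destruct (Nat.lt_ge_cases i n). auto. rewrite opnorm_zero; auto.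
Qed.

Lemma gamma0_iff : forall (A : CStarAlg) n (x : nat -> A) z e Rr k eps r As, (forall j, vars_lt n (e j)) ->
  Gamma_top A n 0 x z e Rr k eps r As <->
  tuple_wf k n As /\ (forall i, (i<n)%nat -> mat_selfadj k (As i)) /\ (forall i, (i<n)%nat -> opnorm k (As i) <= Rr) /\
  forall j, (1 <= j <= r)%nat ->
    Rabs (opnorm k (meval k As (ncmap QC2C (e j))) - canorm A (aeval A x (ncmap QC2C (e j)))) <= eps.
Proof.
  intros A n x z e Rr k eps r As He.
  assert (E1 : forall Bs j, meval k (join n As Bs) (ncmap QC2C (e j)) = meval k As (ncmap QC2C (e j))).
  { intros. apply (meval_ext k n). apply vars_lt_ncmap; auto. intros. unfold join.
    rewrite (proj2 (Nat.ltb_lt _ _) H); auto. }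
  assert (E2 : forall j, aeval A (join n x z) (ncmap QC2C (e j)) = aeval A x (ncmap QC2C (e j))).
  { intros. apply (aeval_ext A n). apply vars_lt_ncmap; auto. intros. unfold join.
    rewrite (proj2 (Nat.ltb_lt _ _) H); auto. }
  split.
  - intros [H1 [H2 [Bs [_ [_ [H3 [_ H4]]]]]]]. split; [auto | split; [auto | split; [auto |]]].
    intros j Hj. rewrite <- E1 with (Bs := Bs), <- E2. auto.
  - intros [H1 [H2 [H3 H4]]]. split; auto. split; auto. exists (fun _ _ _ => C0).
    split; [split; [intros; lia|intros; reflexivity]|].
    repeat split; try (intros; lia); auto.
    intros j Hj. rewrite E1, E2. auto.
Qed.

Lemma microstate_tuple : forall (A : CStarAlg) n (x : nat -> A) e Rr k eps r As, is_enum n e ->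
  Gamma_top A n 0 x (fun _ => ca0 A) e Rr k eps r As ->
  tuple_wf k n As /\ tuple_allwf k As /\ tuple_sa As /\ (0 <= Rr -> forall i, opnorm k (As i) <= Rr).
Proof.
  intros A n x e Rr k eps r As He H. apply gamma0_iff in H as [H1 [H2 [H3 _]]]; [|apply He].
  split; [auto | split; [| split]].
  - apply (tuple_wf_allwf k n); auto.
  - apply (tuple_sa_of k n); auto.
  - intros HR. apply (tuple_opnorm_all k n); auto.
Qed.

Lemma Rabs_le_bounds : forall z e, Rabs z <= e -> - e <= z <= e.
Proof. intros. pose proof (Rle_abs z); pose proof (Rle_abs (- z)). rewrite Rabs_Ropp in *. lra. Qed.

Lemma microstate_norm : forall (A : CStarAlg) n (x : nat -> A) e Rr k eps r As idx P, is_enum n e ->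
  Gamma_top A n 0 x (fun _ => ca0 A) e Rr k eps r As -> (1 <= idx <= r)%nat -> e idx = P ->
  - eps <= opnorm k (meval k As (ncmap QC2C P)) - canorm A (aeval A x (ncmap QC2C P)) <= eps.
Proof.
  intros A n x e Rr k eps r As idx P He H Hidx <-. apply gamma0_iff in H as [_ [_ [_ H]]]; [|apply He].
  apply Rabs_le_bounds, H; auto.
Qed.

(** * Finitary choices *)

Lemma choice_nat : forall {Y : Type} (y0 : Y) (Rel : nat -> Y -> Prop),
  (forall j, exists q, Rel j q) -> exists f : nat -> Y, forall j, Rel j (f j).
Proof.
  intros. exists (fun j => epsilon (inhabits y0) (Rel j)). intros. apply epsilon_spec. auto.
Qed.

Lemma common_delta : forall (A : CStarAlg) p (y : nat -> A) (Pr : nat -> (nat -> A) -> Prop) K,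
  (forall i, (i<K)%nat -> exists d, 0 < d /\ forall v, (forall j, (j<p)%nat -> canorm A (v j -A y j) < d) -> Pr i v) ->
  exists d, 0 < d /\ forall v, (forall j, (j<p)%nat -> canorm A (v j -A y j) < d) -> forall i, (i<K)%nat -> Pr i v.
Proof.
  induction K; intros.
  - exists 1; split; [lra|]. intros; lia.
  - destruct IHK as [d1 [Hd1 H1]]. intros; apply H; lia.
    destruct (H K ltac:(lia)) as [d2 [Hd2 H2]].
    exists (Rmin d1 d2). split. apply Rmin_glb_lt; auto.
    intros v Hv i Hi. destruct (Nat.eq_dec i K) as [->|Hne].
    + apply H2. intros; eapply Rlt_le_trans; [apply Hv; auto|apply Rmin_r].
    + apply H1; [|lia]. intros; eapply Rlt_le_trans; [apply Hv; auto|apply Rmin_l].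
Qed.

Lemma index_bound : forall n (ex : nat -> ncpoly QC) (f : nat -> ncpoly QC) K, is_enum n ex ->
  (forall i, (i<K)%nat -> vars_lt n (f i)) ->
  exists r, (1 <= r)%nat /\ forall i, (i<K)%nat -> exists idx, (1 <= idx <= r)%nat /\ ex idx = f i.
Proof.
  intros n ex f K [_ He]. induction K; intros Hf.
  - exists 1%nat; split; auto. intros; lia.
  - destruct IHK as [r [Hr H1]]. intros; apply Hf; lia.
    destruct (He (f K) (Hf K ltac:(lia))) as [idx [Hidx Heq]].
    exists (Nat.max r idx). split. lia. intros i Hi. destruct (Nat.eq_dec i K) as [->|Hne].
    + exists idx; split; auto; lia.
    + destruct (H1 i ltac:(lia)) as [id [Hid Heq']]. exists id; split; auto; lia.
Qed.

Lemma generates_rational : forall (A : CStarAlg) p (y t : nat -> A) K eps, generates A p y -> 0 < eps ->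
  exists S : nat -> ncpoly QC, forall i, vars_lt p (S i) /\
    ((i < K)%nat -> canorm A (aeval A y (ncmap QC2C (S i)) -A t i) < eps).
Proof.
  intros A p y t K eps Gy He.
  apply (choice_nat (NCvar 0) (fun i S => vars_lt p S /\
    ((i < K)%nat -> canorm A (aeval A y (ncmap QC2C S) -A t i) < eps))). intros i. destruct (lt_dec i K) as [Hi|Hi].
  - destruct (Gy (t i) (eps/2) ltac:(lra)) as [P [HP1 HP2]].
    destruct (rational_approx_poly A y P (eps/2) ltac:(lra)) as [Pq [HV HPq]].
    exists Pq. split; [apply HV; auto|]. intros _.
    eapply Rle_lt_trans; [apply (norm_sub_tri _ (aeval A y P))|]. lra.
  - exists (NCconst (0%Q,0%Q)). split; [simpl; auto | intros; lia].
Qed.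

(** * Transferring orbit covers *)

Lemma pick_list : forall {X Y : Type} (Sx : Y -> Prop) (Rl : Y -> X -> Prop) (L : list X),
  exists L' : list Y, (length L' <= length L)%nat /\ (forall a, In a L' -> Sx a) /\
    forall c, In c L -> (exists a, Sx a /\ Rl a c) -> exists a, In a L' /\ Rl a c.
Proof.
  induction L as [|c L IH].
  - exists nil. simpl. split; auto. split. intros _ []. intros _ [].
  - destruct IH as [L' [H1 [H2 H3]]].
    destruct (classic (exists a, Sx a /\ Rl a c)) as [[a [Ha Hac]]|Hn].
    + exists (a :: L'). simpl. split. lia. split. intros b [<-|Hb]; auto.
      intros c' [<-|Hc'] Hex. exists a; auto. destruct (H3 c' Hc' Hex) as [b [Hb Hbc]]. exists b; auto.
    + exists L'. simpl. split. lia. split; auto.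
      intros c' [<-|Hc'] Hex. exfalso; auto. auto.
Qed.

Lemma cover_transfer : forall k n p (Sx Sy : (nat -> Mat) -> Prop) (phi : (nat -> Mat) -> nat -> Mat) om om' N,
  orbit_covers k p Sy om N ->
  (forall a, Sx a -> Sy (phi a)) ->
  (forall a b c W V, Sx a -> Sx b -> Sy c -> mat_unitary k W -> mat_unitary k V ->
     orbit_dist k p (phi a) c W < om -> orbit_dist k p (phi b) c V < om ->
     orbit_dist k n a b (mat_mul k W (mat_adj V)) < om') ->
  (o2 k n Sx om' <= N)%nat.
Proof.
  intros k n p Sx Sy phi om om' N [CY [HN [HCY HcovY]]] Hphi Hclose.
  destruct (pick_list Sx (fun a c => exists W, mat_unitary k W /\ orbit_dist k p (phi a) c W < om) CY)
    as [CX [Hlen [HCX Hpick]]].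
  apply Nat.le_trans with (length CX); [|lia].
  apply o2_le. exists CX. repeat split; auto.
  intros a Ha.
  destruct (HcovY (phi a) (Hphi a Ha)) as [c [Hc [W [HW HdW]]]].
  destruct (Hpick c Hc (ex_intro _ a (conj Ha (ex_intro _ W (conj HW HdW))))) as [b [Hb [V [HV HdV]]]].
  exists b. split; auto. exists (mat_mul k W (mat_adj V)).
  split; [apply unitary_mul; auto; apply unitary_adj; auto|].
  apply (Hclose a b c W V); auto.
Qed.

Definition conjT (k : nat) (W : Mat) (As : nat -> Mat) : nat -> Mat := fun i => conjW k W (As i).
Definition tuple_eval (k : nat) (S : nat -> ncpoly C) (X : nat -> Mat) : nat -> Mat := fun i => meval k X (S i).

Lemma tuple_eval_conjT : forall k S W X, mat_unitary k W -> tuple_allwf k X ->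
  tuple_eval k S (conjT k W X) = conjT k W (tuple_eval k S X).
Proof. intros. extensionality i. unfold tuple_eval, conjT. apply meval_conjW; auto. Qed.

Lemma tuple_lip : forall k n N (S : nat -> ncpoly C) Rr As Bs, 0 <= Rr ->
  (forall i, (i<n)%nat -> vars_lt N (S i)) ->
  tuple_allwf k As -> tuple_allwf k Bs -> tuple_sa Bs ->
  (forall i, opnorm k (As i) <= Rr) -> (forall i, opnorm k (Bs i) <= Rr) ->
  tdist k n (tuple_eval k S As) (tuple_eval k S Bs) <= Rsum n (fun i => plip Rr (S i)) * tdist k N As Bs.
Proof.
  intros. eapply Rle_trans. apply tdist_le_sum. rewrite Rmult_comm, <- Rsum_scal. apply Rsum_le; intros.
  rewrite Rmult_comm. apply meval_lip; auto.
Qed.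

Lemma tuple_eval_orbit : forall k n p (S : nat -> ncpoly C) Ry om (Pa c : nat -> Mat) W, 0 <= Ry ->
  (forall i, (i<n)%nat -> vars_lt p (S i)) -> mat_unitary k W ->
  tuple_allwf k Pa -> tuple_allwf k c -> tuple_sa c ->
  (forall i, opnorm k (Pa i) <= Ry) -> (forall i, opnorm k (c i) <= Ry) ->
  orbit_dist k p Pa c W < om ->
  tdist k n (tuple_eval k S Pa) (conjT k W (tuple_eval k S c)) <= Rsum n (fun i => plip Ry (S i)) * om.
Proof.
  intros k n p S Ry om Pa c W HRy HV HW wPa wc sc oPa oc Hd.
  assert (HL0 : 0 <= Rsum n (fun i => plip Ry (S i))) by (apply Rsum_nonneg; intros; apply plip_ge0; auto).
  rewrite orbit_dist_tdist in Hd. fold (conjT k W c) in Hd.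
  rewrite <- tuple_eval_conjT by auto. eapply Rle_trans.
  - apply (tuple_lip k n p S Ry Pa (conjT k W c)); auto.
    + intros i; apply conjW_wf; [apply HW | apply wc].
    + intros i; unfold conjT; rewrite conjW_adj, sc; auto.
    + intros i; eapply Rle_trans; [apply opnorm_conjW; auto | auto].
  - apply Rmult_le_compat_l; auto. lra.
Qed.

(* The key estimate: if a and b are om'/4-close to S(Pa) and S(Pb), and Pa, Pb lie
   in om-orbit balls (via W and V) around a self-adjoint centre c, then a lies in
   the om'-orbit ball of b via W V^*, provided L om < om'/4:
   a ~ S(Pa) ~ W S(c) W^* ~ (W V^* ) S(Pb) (W V^* )^* ~ (W V^* ) b (W V^* )^*. *)
Lemma orbit_pullback_estimate : forall k n p (S : nat -> ncpoly C) (Ry om om' : R) (a b c Pa Pb : nat -> Mat) W V,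
  0 <= Ry -> (forall i, (i<n)%nat -> vars_lt p (S i)) ->
  mat_unitary k W -> mat_unitary k V ->
  tuple_allwf k Pa -> tuple_allwf k Pb -> tuple_allwf k c -> tuple_sa c ->
  (forall i, opnorm k (Pa i) <= Ry) -> (forall i, opnorm k (Pb i) <= Ry) -> (forall i, opnorm k (c i) <= Ry) ->
  tdist k n a (tuple_eval k S Pa) < om' / 4 -> tdist k n b (tuple_eval k S Pb) < om' / 4 ->
  orbit_dist k p Pa c W < om -> orbit_dist k p Pb c V < om ->
  Rsum n (fun i => plip Ry (S i)) * om < om' / 4 ->
  orbit_dist k n a b (mat_mul k W (mat_adj V)) < om'.
Proof.
  intros k n p S Ry om om' a b c Pa Pb W V HRy HV HW HVu wPa wPb wc sc oPa oPb oc Ha Hb HdW HdV HLom.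
  set (U := mat_mul k W (mat_adj V)).
  assert (HU : mat_unitary k U) by (apply unitary_mul; auto; apply unitary_adj; auto).
  assert (ScW : tdist k n (tuple_eval k S Pa) (conjT k W (tuple_eval k S c)) <= Rsum n (fun i => plip Ry (S i)) * om)
    by (apply (tuple_eval_orbit k n p S Ry om Pa c W); auto).
  assert (ScV : tdist k n (conjT k W (tuple_eval k S c)) (conjT k U (tuple_eval k S Pb)) <= Rsum n (fun i => plip Ry (S i)) * om).
  { (* conjugating by W^* reduces this to the previous estimate for Pb and V *)
    assert (E : conjT k U (tuple_eval k S Pb) = conjT k W (conjT k (mat_adj V) (tuple_eval k S Pb))).
    { extensionality i. unfold conjT, U. rewrite conjW_comp; auto. }
    assert (E2 : tuple_eval k S c = conjT k (mat_adj V) (conjT k V (tuple_eval k S c))).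
    { extensionality i. unfold conjT. rewrite conjW_inv; auto. apply meval_wf; auto. }
    rewrite E. unfold conjT at 1 2. rewrite (tdist_conjW k n W _ _ HW).
    rewrite E2. unfold conjT at 1 3. rewrite (tdist_conjW k n (mat_adj V) _ _ (unitary_adj k V HVu)).
    rewrite tdist_sym. apply (tuple_eval_orbit k n p S Ry om Pb c V); auto. }
  assert (Sb : tdist k n (conjT k U (tuple_eval k S Pb)) (conjT k U b) < om' / 4).
  { unfold conjT. rewrite tdist_conjW, tdist_sym by auto. auto. }
  rewrite orbit_dist_tdist. fold (conjT k U b).
  pose proof (tdist_tri k n a (tuple_eval k S Pa) (conjT k U b)).
  pose proof (tdist_tri k n (tuple_eval k S Pa) (conjT k W (tuple_eval k S c)) (conjT k U b)).
  pose proof (tdist_tri k n (conjT k W (tuple_eval k S c)) (conjT k U (tuple_eval k S Pb)) (conjT k U b)).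
  lra.
Qed.

(** * Polynomials relating the two generating families *)

Definition mone : QC := (Qmake (-1) 1, 0%Q).
Lemma QC2C_mone : QC2C mone = Copp C1.
Proof. unfold QC2C, mone; simpl. rewrite Q2R_frac. unfold Q2R; simpl. apply C_ext; simpl; field. Qed.


(* Dpoly S SQ i = S_i(SQ) - X_i: its norm at the microstates of x measures how far
   the round trip x |-> SQ(x) |-> S(SQ(x)) moves the i-th coordinate. *)
Definition Dpoly (S : nat -> ncpoly QC) (SQ : nat -> ncpoly QC) (i : nat) : ncpoly QC :=
  NCadd (psubst (S i) SQ) (NCmul (NCconst mone) (NCvar i)).

Lemma vars_Dpoly : forall n p S SQ i, (i < n)%nat -> vars_lt p (S i) -> (forall j, (j<p)%nat -> vars_lt n (SQ j)) ->
  vars_lt n (Dpoly S SQ i).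
Proof. intros. simpl. repeat split; auto. eapply vars_lt_psubst; eauto. Qed.

Lemma meval_Dpoly : forall k As S SQ i, tuple_allwf k As ->
  opnorm k (meval k As (ncmap QC2C (Dpoly S SQ i))) = opnorm k (mat_sub (meval k As (ncmap QC2C (psubst (S i) SQ))) (As i)).
Proof.
  intros. simpl. rewrite QC2C_mone, mat_mul_scall, mat_id_l by auto. apply opnorm_ext; intros.
  unfold mat_add, mat_sub, mat_scal. Cring.
Qed.

Lemma aeval_Dpoly : forall (A : CStarAlg) x S SQ i,
  aeval A x (ncmap QC2C (Dpoly S SQ i)) = aeval A x (ncmap QC2C (psubst (S i) SQ)) -A x i.
Proof.
  intros. simpl. rewrite QC2C_mone, ca_mulscl, ca_mul1l, <- opp_sc. auto.
Qed.


Lemma meval_symQ_sa : forall k As Q, tuple_allwf k As -> tuple_sa As ->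
  mat_selfadj k (meval k As (ncmap QC2C (symQ Q))).
Proof.
  intros. split. apply meval_wf; auto.
  simpl. rewrite QC2C_half, ncmap_padj, <- meval_adj by auto.
  set (X := meval k As (ncmap QC2C Q)).
  assert (HX : mat_wf k X) by (apply meval_wf; auto).
  rewrite mat_mul_scall, mat_id_l by (apply mat_add_wf; auto; apply mat_adj_wf; auto).
  intros i j. unfold mat_adj at 1, mat_scal, mat_add, mat_adj. unfold hC. Cring.
Qed.

(** * Monotonicity in omega *)

Lemma o2_mono_om : forall (A : CStarAlg) n (x : nat -> A) e Rr k eps r om1 om2, is_enum n e -> (1 <= k)%nat ->
  0 < om1 <= om2 ->
  (o2 k n (Gamma_top A n 0 x (fun _ => ca0 A) e Rr k eps r) om2 <= o2 k n (Gamma_top A n 0 x (fun _ => ca0 A) e Rr k eps r) om1)%nat.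
Proof.
  intros A n x e Rr k eps r om1 om2 He Hk Hom.
  set (Sg := Gamma_top A n 0 x (fun _ => ca0 A) e Rr k eps r).
  assert (HB : forall As, Sg As -> tuple_wf k n As /\ forall i, (i<n)%nat -> opnorm k (As i) <= Rr).
  { intros As H. apply gamma0_iff in H; [tauto | apply He]. }
  destruct (o2_spec k n Sg om1 (cover_exists k n Sg om1 Rr Hk (proj1 Hom) HB)) as [[L [HL1 [HL2 HL3]]] _].
  apply o2_le. exists L. split; auto. split; auto. intros As HA. destruct (HL3 As HA) as [c [Hc [W [HW Hd]]]].
  exists c; split; auto. exists W; split; auto. lra.
Qed.

Lemma Kom_antitone : forall (A : CStarAlg) n (x : nat -> A) e om1 om2, is_enum n e -> 0 < om1 <= om2 ->
  ERle (Ktop_om A n 0 x (fun _ => ca0 A) e om2) (Ktop_om A n 0 x (fun _ => ca0 A) e om1).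
Proof.
  intros. unfold Ktop_om. apply sup_le. intros v [Rr [HR ->]].
  eapply ERle_trans; [|apply sup_ub; exists Rr; split; [exact HR|reflexivity]].
  apply le_inf. intros w [eps [r [He [Hr ->]]]].
  eapply ERle_trans. apply inf_lb. exists eps, r. split; [exact He|split; [exact Hr|reflexivity]].
  apply limsup_seq_mono. intros k Hk. apply log_div_mono. apply o2_mono_om; auto.
Qed.

(* Consequently the limsup as omega -> 0+ is a supremum over all omega > 0. *)
Lemma Ktop_sup : forall (A : CStarAlg) n (x : nat -> A) e, is_enum n e ->
  Ktop A n x e = ER_sup (fun w => exists om, 0 < om /\ w = Ktop_om A n 0 x (fun _ => ca0 A) e om).
Proof.
  intros A n x e He. set (f := fun om => Ktop_om A n 0 x (fun _ => ca0 A) e om).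
  unfold Ktop, Ktop_rel, ER_limsup_0plus. fold f. apply ERle_antisym.
  - eapply ERle_trans; [apply inf_lb; exists 1; split; [lra | reflexivity]|].
    apply sup_le. intros w [om [Hom ->]]. apply sup_ub. exists om; split; [lra | reflexivity].
  - apply le_inf. intros v [d [Hd ->]]. apply sup_le. intros w [om [Hom ->]].
    apply ERle_trans with (f (Rmin om (d/2))).
    + apply Kom_antitone; auto. split; [apply Rmin_glb_lt; lra | apply Rmin_l].
    + apply sup_ub. exists (Rmin om (d/2)). split; [|reflexivity]. split; [apply Rmin_glb_lt; lra|].
      eapply Rle_lt_trans; [apply Rmin_r | lra].
Qed.

(** * Comparison of the orbit dimensions of two generating families *)

Section Comparison.

Variables (A : CStarAlg) (n p : nat) (x y : nat -> A) (ex ey : nat -> ncpoly QC).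
Hypothesis Hx : forall i, (i < n)%nat -> selfadjoint (x i).
Hypothesis Hy : forall j, (j < p)%nat -> selfadjoint (y j).
Hypothesis Gx : generates A n x.
Hypothesis Gy : generates A p y.
Hypothesis Ex : is_enum n ex.
Hypothesis Ey : is_enum p ey.

Local Notation GammaX Rr k eps r := (Gamma_top A n 0 x (fun _ => ca0 A) ex Rr k eps r).
Local Notation GammaY Rr k eps r := (Gamma_top A p 0 y (fun _ => ca0 A) ey Rr k eps r).

Definition listed (r : nat) (P : ncpoly QC) : Prop := exists idx, (1 <= idx <= r)%nat /\ ex idx = P.

Definition symfam (Q : nat -> ncpoly QC) : nat -> ncpoly QC := fun j => symQ (Q j).
Definition approx_y (Q : nat -> ncpoly QC) : nat -> A := fun j => aeval A x (ncmap QC2C (symQ (Q j))).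

Definition pullback (Q : nat -> ncpoly QC) (k : nat) (As : nat -> Mat) : nat -> Mat :=
  fun j => if Nat.ltb j p then meval k As (ncmap QC2C (symQ (Q j))) else fun _ _ => C0.

Lemma pullback_wf : forall Q k As, tuple_allwf k As -> tuple_wf k p (pullback Q k As).
Proof.
  intros Q k As H. split; intros j Hj; unfold pullback.
  - rewrite (proj2 (Nat.ltb_lt _ _) Hj). apply meval_wf; auto.
  - rewrite (proj2 (Nat.ltb_ge _ _) Hj). auto.
Qed.

Lemma pullback_eval : forall Q k As P, vars_lt p P ->
  meval k (pullback Q k As) (ncmap QC2C P) = meval k As (ncmap QC2C (psubst P (symfam Q))).
Proof.
  intros. rewrite ncmap_psubst, meval_psubst. apply (meval_ext k p); [apply vars_lt_ncmap; auto|].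
  intros j Hj. unfold pullback. rewrite (proj2 (Nat.ltb_lt _ _) Hj). auto.
Qed.

Lemma aeval_symfam : forall Q P,
  aeval A x (ncmap QC2C (psubst P (symfam Q))) = aeval A (approx_y Q) (ncmap QC2C P).
Proof. intros. rewrite ncmap_psubst, aeval_psubst. reflexivity. Qed.

(* The data relating the microstate parameters (epx, rx) of x to those (epy, ry, Ry)
   of y: the approximants Sp of x in y and Q of y in x, the polynomials that the
   microstates of x must control, and the approximation quality of Q(x). *)
Record transfer_params (Sp Q : nat -> ncpoly QC) (Ry b epy epx : R) (ry rx : nat) : Prop := {
  tp_Sp_vars : forall i, vars_lt p (Sp i);
  tp_epx_pos : 0 < epx;
  tp_rx_pos : (1 <= rx)%nat;
  tp_epx_half : epx <= 1 / 2;
  tp_epx_epy : epx <= epy / 2;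
  tp_epx_b : epx <= b / 2;
  tp_listed_Q : forall j, (j < p)%nat -> listed rx (symQ (Q j));
  tp_listed_ey : forall j, (j <= ry)%nat -> listed rx (psubst (ey j) (symfam Q));
  tp_listed_D : forall i, (i < n)%nat -> listed rx (Dpoly Sp (symfam Q) i);
  tp_norm : forall j, (j < p)%nat -> nrm (approx_y Q j) + 1 / 2 <= Ry;
  tp_ey : forall j, (j <= ry)%nat ->
    nrm (aeval A (approx_y Q) (ncmap QC2C (ey j)) -A aeval A y (ncmap QC2C (ey j))) < epy / 2;
  tp_Sp : forall i, (i < n)%nat -> nrm (aeval A (approx_y Q) (ncmap QC2C (Sp i)) -A x i) < b / 2
}.
Arguments tp_Sp_vars {Sp Q Ry b epy epx ry rx} _ _.
Arguments tp_epx_pos {Sp Q Ry b epy epx ry rx} _.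
Arguments tp_rx_pos {Sp Q Ry b epy epx ry rx} _.

Lemma pullback_in_gamma : forall Sp Q Ry b epy epx ry rx Rr k As,
  transfer_params Sp Q Ry b epy epx ry rx -> GammaX Rr k epx rx As -> GammaY Ry k epy ry (pullback Q k As).
Proof.
  intros Sp Q Ry b epy epx ry rx Rr k As TP HA.
  destruct TP as [_ _ _ Hhalf Hepy _ HlQ Hley _ Hnorm Hey _].
  destruct (microstate_tuple A n x ex Rr k epx rx As Ex HA) as [_ [wA [sA _]]].
  apply gamma0_iff; [apply Ey|]. split; [apply pullback_wf; auto|]. split; [|split].
  - intros j Hj. unfold pullback. rewrite (proj2 (Nat.ltb_lt _ _) Hj). apply meval_symQ_sa; auto.
  - intros j Hj. unfold pullback. rewrite (proj2 (Nat.ltb_lt _ _) Hj).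
    destruct (HlQ j Hj) as [idx [Hidx Heq]].
    pose proof (microstate_norm A n x ex Rr k epx rx As idx _ Ex HA Hidx Heq).
    pose proof (Hnorm j Hj). unfold approx_y in *. lra.
  - intros j Hj. rewrite pullback_eval by apply (proj1 Ey).
    destruct (Hley j ltac:(lia)) as [idx [Hidx Heq]].
    pose proof (microstate_norm A n x ex Rr k epx rx As idx _ Ex HA Hidx Heq) as Hm.
    rewrite aeval_symfam in Hm. pose proof (Hey j ltac:(lia)) as Hc.
    pose proof (Rabs_le_bounds _ _ (norm_rev (aeval A (approx_y Q) (ncmap QC2C (ey j))) (aeval A y (ncmap QC2C (ey j))))).
    apply Rabs_le. lra.
Qed.

Lemma pullback_roundtrip : forall Sp Q Ry b epy epx ry rx Rr k As,
  transfer_params Sp Q Ry b epy epx ry rx -> (1 <= k)%nat -> GammaX Rr k epx rx As ->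
  tdist k n As (tuple_eval k (fun i => ncmap QC2C (Sp i)) (pullback Q k As)) <= INR n * b.
Proof.
  intros Sp Q Ry b epy epx ry rx Rr k As TP Hk HA.
  destruct TP as [HSv _ _ _ _ Hb _ _ HlD _ _ HSp].
  destruct (microstate_tuple A n x ex Rr k epx rx As Ex HA) as [_ [wA _]].
  rewrite tdist_sym. eapply Rle_trans; [apply tdist_le_sum|]. rewrite <- Rsum_const.
  apply Rsum_le; intros i Hi. unfold tuple_eval. rewrite pullback_eval by apply HSv.
  eapply Rle_trans; [apply mnorm2_le_opnorm; auto|]. rewrite <- meval_Dpoly by auto.
  destruct (HlD i Hi) as [idx [Hidx Heq]].
  pose proof (microstate_norm A n x ex Rr k epx rx As idx _ Ex HA Hidx Heq) as Hm.
  rewrite aeval_Dpoly, aeval_symfam in Hm.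
  pose proof (HSp i Hi). lra.
Qed.

Lemma listed_mono : forall r r' P, (r <= r')%nat -> listed r P -> listed r' P.
Proof. intros r r' P Hr [idx [Hidx Heq]]. exists idx; split; [lia | auto]. Qed.

Lemma listing_bound : forall (Sp Q : nat -> ncpoly QC) (ry : nat), (forall i, vars_lt p (Sp i)) -> (forall j, vars_lt n (Q j)) ->
  exists rx, (1 <= rx)%nat /\ (forall j, (j < p)%nat -> listed rx (symQ (Q j))) /\
    (forall j, (j <= ry)%nat -> listed rx (psubst (ey j) (symfam Q))) /\
    (forall i, (i < n)%nat -> listed rx (Dpoly Sp (symfam Q) i)).
Proof.
  intros Sp Q ry HSv HQv.
  assert (HSQv : forall j, vars_lt n (symfam Q j)) by (intros; apply vars_lt_symQ, HQv).
  destruct (index_bound n ex (symfam Q) p Ex) as [r1 [Hr1 Hi1]]; [auto|].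
  destruct (index_bound n ex (fun j => psubst (ey j) (symfam Q)) (S ry) Ex) as [r2 [_ Hi2]].
  { intros. apply (vars_lt_psubst p); [apply (proj1 Ey) | auto]. }
  destruct (index_bound n ex (Dpoly Sp (symfam Q)) n Ex) as [r3 [_ Hi3]].
  { intros. apply (vars_Dpoly n p); auto. }
  exists (Nat.max r1 (Nat.max r2 r3)). split; [lia | split; [| split]].
  - intros j Hj. apply (listed_mono r1); [lia | apply Hi1; auto].
  - intros j Hj. apply (listed_mono r2); [lia | apply Hi2; lia].
  - intros i Hi. apply (listed_mono r3); [lia | apply Hi3; auto].
Qed.

Lemma symmetric_approximants : forall dl, 0 < dl ->
  exists Q, (forall j, vars_lt n (Q j)) /\ forall j, (j < p)%nat -> nrm (approx_y Q j -A y j) < dl.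
Proof.
  intros dl Hdl. destruct (generates_rational A n x y p dl Gx Hdl) as [Q HQ].
  exists Q. split; [apply HQ|]. intros j Hj. unfold approx_y.
  rewrite (aeval_symQ A n) by (auto; apply HQ).
  eapply Rle_lt_trans; [apply sym_est; auto | apply HQ; auto].
Qed.

(* Given Sp approximating x in y, suitable Q, epx and rx exist for any epy and ry:
   Q(x) must approximate y so well that Sp and ey_0, ..., ey_ry barely move. *)
Lemma x_parameters : forall Sp Ry b epy ry, 0 < b -> 0 < epy ->
  (forall i, vars_lt p (Sp i)) ->
  (forall i, (i < n)%nat -> nrm (aeval A y (ncmap QC2C (Sp i)) -A x i) < b / 4) ->
  (forall j, (j < p)%nat -> nrm (y j) + 1 <= Ry) ->
  exists Q epx rx, transfer_params Sp Q Ry b epy epx ry rx.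
Proof.
  intros Sp Ry b epy ry Hb Hepy HSv HSa HRy.
  destruct (common_delta A p y (fun i v => nrm (aeval A v (ncmap QC2C (Sp i)) -A aeval A y (ncmap QC2C (Sp i))) < b/4) n)
    as [d1 [Hd1 Hd1']].
  { intros i Hi. apply (aeval_cont A p); [apply vars_lt_ncmap; auto | lra]. }
  destruct (common_delta A p y (fun j v => nrm (aeval A v (ncmap QC2C (ey j)) -A aeval A y (ncmap QC2C (ey j))) < epy/2) (S ry))
    as [d2 [Hd2 Hd2']].
  { intros j _. apply (aeval_cont A p); [apply vars_lt_ncmap, (proj1 Ey) | lra]. }
  set (dl := Rmin (1/2) (Rmin d1 d2)).
  assert (Hdl : 0 < dl) by (apply Rmin_glb_lt; [lra | apply Rmin_glb_lt; auto]).
  assert (Hdl_half : dl <= 1/2) by apply Rmin_l.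
  assert (Hdl1 : dl <= d1) by (eapply Rle_trans; [apply Rmin_r | apply Rmin_l]).
  assert (Hdl2 : dl <= d2) by (eapply Rle_trans; [apply Rmin_r | apply Rmin_r]).
  destruct (symmetric_approximants dl Hdl) as [Q [HQv Hv]].
  destruct (listing_bound Sp Q ry HSv HQv) as [rx [Hrx [HlQ [Hley HlD]]]].
  set (epx := Rmin (1/2) (Rmin (epy/2) (b/2))).
  pose proof (Rmin_l (1/2) (Rmin (epy/2) (b/2))); pose proof (Rmin_r (1/2) (Rmin (epy/2) (b/2)));
  pose proof (Rmin_l (epy/2) (b/2)); pose proof (Rmin_r (epy/2) (b/2)).
  exists Q, epx, rx. constructor; auto; try (unfold epx; lra).
  - apply Rmin_glb_lt; [lra | apply Rmin_glb_lt; lra].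
  - intros j Hj. pose proof (norm_le_add (approx_y Q j) (y j)). pose proof (Hv j Hj). pose proof (HRy j Hj). lra.
  - intros j Hj. apply Hd2'; [intros j' Hj'; apply Rlt_le_trans with dl; auto | lia].
  - intros i Hi. eapply Rle_lt_trans; [apply (norm_sub_tri _ (aeval A y (ncmap QC2C (Sp i))))|].
    assert (nrm (aeval A (approx_y Q) (ncmap QC2C (Sp i)) -A aeval A y (ncmap QC2C (Sp i))) < b/4)
      by (apply Hd1'; auto; intros j' Hj'; apply Rlt_le_trans with dl; auto).
    pose proof (HSa i Hi). lra.
Qed.

Lemma gammaY_tuple : forall Ry k epy ry Bs, 0 <= Ry -> GammaY Ry k epy ry Bs ->
  tuple_wf k p Bs /\ tuple_allwf k Bs /\ tuple_sa Bs /\ forall j, opnorm k (Bs j) <= Ry.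
Proof.
  intros Ry k epy ry Bs HRy HB.
  destruct (microstate_tuple A p y ey Ry k epy ry Bs Ey HB) as [h1 [h2 [h3 h4]]].
  split; [exact h1 | split; [exact h2 | split; [exact h3 | apply h4; exact HRy]]].
Qed.

Lemma pullback_orbit_close : forall Sp Q Ry b epy epx ry rx om om' Rr k a a' c W V,
  transfer_params Sp Q Ry b epy epx ry rx -> (1 <= k)%nat -> 0 <= Ry ->
  INR n * b < om' / 4 -> Rsum n (fun i => plip Ry (ncmap QC2C (Sp i))) * om < om' / 4 ->
  GammaX Rr k epx rx a -> GammaX Rr k epx rx a' -> GammaY Ry k epy ry c ->
  mat_unitary k W -> mat_unitary k V ->
  orbit_dist k p (pullback Q k a) c W < om -> orbit_dist k p (pullback Q k a') c V < om ->
  orbit_dist k n a a' (mat_mul k W (mat_adj V)) < om'.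
Proof.
  intros Sp Q Ry b epy epx ry rx om om' Rr k a a' c W V TP Hk HRy Hnb HLom Ha Ha' Hc HW HV HdW HdV.
  destruct (gammaY_tuple _ _ _ _ _ HRy (pullback_in_gamma Sp Q Ry b epy epx ry rx Rr k a TP Ha)) as [_ [w1 [_ o1]]].
  destruct (gammaY_tuple _ _ _ _ _ HRy (pullback_in_gamma Sp Q Ry b epy epx ry rx Rr k a' TP Ha')) as [_ [w2 [_ o2']]].
  destruct (gammaY_tuple _ _ _ _ _ HRy Hc) as [_ [w3 [s3 o3]]].
  apply (orbit_pullback_estimate k n p (fun i => ncmap QC2C (Sp i)) Ry om om' a a' c
           (pullback Q k a) (pullback Q k a') W V); auto.
  - intros; apply vars_lt_ncmap, (tp_Sp_vars TP).
  - apply Rle_lt_trans with (INR n * b); [apply (pullback_roundtrip Sp Q Ry b epy epx ry rx Rr k a TP Hk Ha) | lra].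
  - apply Rle_lt_trans with (INR n * b); [apply (pullback_roundtrip Sp Q Ry b epy epx ry rx Rr k a' TP Hk Ha') | lra].
Qed.

Lemma orbit_numbers_compare : forall om', 0 < om' ->
  exists om, 0 < om /\ exists Ry, 0 < Ry /\
   forall epy ry, 0 < epy -> (1 <= ry)%nat -> exists epx rx, 0 < epx /\ (1 <= rx)%nat /\
   forall Rr k, (1 <= k)%nat -> (o2 k n (GammaX Rr k epx rx) om' <= o2 k p (GammaY Ry k epy ry) om)%nat.
Proof.
  intros om' Hom'.
  set (b := (om' / 4) / (INR n + 1)).
  assert (Hb : 0 < b) by (unfold b; apply Rdiv_lt_0_compat; pose proof (pos_INR n); lra).
  assert (Hnb : INR n * b < om' / 4) by (apply mul_div_succ_lt; [apply pos_INR | lra]).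
  destruct (generates_rational A p y x n (b/4) Gy ltac:(lra)) as [Sp HS].
  set (Ry := 1 + Rsum p (fun j => nrm (y j))).
  assert (HRy : forall j, (j < p)%nat -> nrm (y j) + 1 <= Ry).
  { intros j Hj. pose proof (Rsum_term_le p (fun j => nrm (y j)) j (fun i _ => ca_norm_ge0 _ _) Hj). unfold Ry. lra. }
  assert (HRy0 : 1 <= Ry) by (pose proof (Rsum_nonneg p (fun j => nrm (y j)) (fun i _ => ca_norm_ge0 _ _)); unfold Ry; lra).
  set (L := Rsum n (fun i => plip Ry (ncmap QC2C (Sp i)))).
  assert (HL : 0 <= L) by (apply Rsum_nonneg; intros; apply plip_ge0; lra).
  set (om := (om' / 4) / (L + 1)).
  assert (Hom : 0 < om) by (unfold om; apply Rdiv_lt_0_compat; lra).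
  assert (HLom : L * om < om' / 4) by (apply mul_div_succ_lt; lra).
  exists om. split; [exact Hom|]. exists Ry. split; [lra|].
  intros epy ry Hepy Hry.
  destruct (x_parameters Sp Ry b epy ry) as [Q [epx [rx TP]]]; auto; try apply HS.
  exists epx, rx. split; [apply (tp_epx_pos TP) | split; [apply (tp_rx_pos TP)|]].
  intros Rr k Hk.
  destruct (o2_spec k p (GammaY Ry k epy ry) om) as [Hcov _].
  { apply (cover_exists k p _ om Ry Hk Hom).
    intros Bs HB. destruct (gammaY_tuple Ry k epy ry Bs ltac:(lra) HB) as [h1 [_ [_ h4]]]. auto. }
  apply (cover_transfer k n p _ _ (pullback Q k) om om' _ Hcov).
  - intros As HA. apply (pullback_in_gamma Sp Q Ry b epy epx ry rx Rr k As TP HA).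
  - intros a a' c W V Ha Ha' Hc HW HV HdW HdV.
    apply (pullback_orbit_close Sp Q Ry b epy epx ry rx om om' Rr k a a' c W V TP Hk); auto; lra.
Qed.

Lemma Kom_compare : forall om', 0 < om' -> exists om, 0 < om /\
  ERle (Ktop_om A n 0 x (fun _ => ca0 A) ex om') (Ktop_om A p 0 y (fun _ => ca0 A) ey om).
Proof.
  intros om' Hom'. destruct (orbit_numbers_compare om' Hom') as [om [Hom [Ry [HRy Hc]]]].
  exists om. split; auto. unfold Ktop_om. apply sup_le. intros v [Rr [HR ->]].
  eapply ERle_trans; [|apply sup_ub; exists Ry; split; [exact HRy | reflexivity]].
  apply le_inf. intros w [epy [ry [Hepy [Hry ->]]]].
  destruct (Hc epy ry Hepy Hry) as [epx [rx [Hepx [Hrx Hc']]]].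
  eapply ERle_trans; [apply inf_lb; exists epx, rx; split; [exact Hepx | split; [exact Hrx | reflexivity]]|].
  apply limsup_seq_mono. intros k Hk. apply log_div_mono. apply Hc'; auto.
Qed.

Lemma K_le : ERle (Ktop A n x ex) (Ktop A p y ey).
Proof.
  rewrite (Ktop_sup A n x ex Ex), (Ktop_sup A p y ey Ey).
  apply sup_le. intros w [om' [Hom' ->]].
  destruct (Kom_compare om' Hom') as [om [Hom Hle]].
  eapply ERle_trans; [exact Hle|]. apply sup_ub. exists om; split; auto.
Qed.

End Comparison.

Theorem theorem3p2 :
  forall (A : CStarAlg) (n p : nat) (x y : nat -> A)
         (ex ey : nat -> ncpoly QC),
    (forall i, (i < n)%nat -> selfadjoint (x i)) ->
    (forall j, (j < p)%nat -> selfadjoint (y j)) ->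
    generates A n x ->
    generates A p y ->
    is_enum n ex ->
    is_enum p ey ->
    Ktop A n x ex = Ktop A p y ey.
Proof.
  intros A n p x y ex ey Hx Hy Gx Gy Ex Ey.
  apply ERle_antisym; apply K_le; auto.
Qed.
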